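(* Let $P=(-1,0)$ and define $u=(u_1,u_2):\overline{B_1}\setminus\{P\}\to\mathbb R^2$ by $u(x)=(1-2|x|,0)$ for $|x|\le 1/2$, and for $0\le\varepsilon\le 1/2$ and $\theta\in[0,2\pi]$, $$u\big((1-\varepsilon)\cos\theta,(1-\varepsilon)\sin\theta\big)=\Big(\min\Big\{\tfrac{1-2\varepsilon}{2\pi\varepsilon}|\pi-\theta|,\,1\Big\},\,0\Big),$$ with the convention that for $\varepsilon=0$ (and $\theta\neq\pi$) the value is $(1,0)$. Let $\gamma:[0,1]\to\mathbb R^2\setminus\{P\}$ be continuous and injective, and let $a_1<b_1<a_2<b_2<\dots<a_N<b_N$ in $[0,1]$ be such that for each $i$, $\gamma((a_i,b_i))\subseteq B_1$ and $\gamma(a_i),\gamma(b_i)\in\partial B_1\setminus\{P\}$. For each $i$ let $\ell_i=\min_{t\in[a_i,b_i]}u_1(\gamma(t))$ and let $A_i$ be the closed arc of $\partial B_1\setminus\{P\}$ with endpoints $\gamma(a_i)$ and $\gamma(b_i)$. If $i\neq j$ and $A_i\subseteq A_j$, then $\ell_j\le\ell_i$.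
   Context: $B_r$ is the open disk of radius $r$ centred at the origin. The map $u$ is continuous on $\overline{B_1}\setminus\{P\}$, takes values in $[0,1]\times\{0\}$, and equals $(1,0)$ on $\partial B_1\setminus\{P\}$. *)

From Stdlib Require Import Reals Lra ClassicalEpsilon.
From Coquelicot Require Import Coquelicot.
Open Scope R_scope.

Definition pt := (R * R)%type.

Definition nrm (x : pt) : R := sqrt (fst x ^ 2 + snd x ^ 2).

Definition Ppt : pt := (-1, 0).

(* The map u of the paper (defined on the closed unit disc minus P; the value
   outside the closed disc is irrelevant and set to (0,0)). *)
Definition u (x : pt) : pt :=
  let r := nrm x in
  if Rle_dec r (1/2) then (1 - 2 * r, 0)
  else if Rle_dec r 1 then
    if Req_EM_T r 1 then (1, 0)
    else
      let eps := 1 - r in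
      (epsilon (inhabits 0)
         (fun v => exists th, 0 <= th <= 2 * PI /\
            x = ((1 - eps) * cos th, (1 - eps) * sin th) /\
            v = Rmin ((1 - 2 * eps) / (2 * PI * eps) * Rabs (PI - th)) 1), 0)
  else (0, 0).

Definition u1 (x : pt) : R := fst (u x).

Definition IsMinOn (f : R -> R) (a b m : R) : Prop :=
  (exists t, a <= t <= b /\ f t = m) /\ (forall t, a <= t <= b -> m <= f t).

Definition on_arc (p q z : pt) : Prop :=
  exists tp tq t,
    -PI < tp < PI /\ -PI < tq < PI /\
    p = (cos tp, sin tp) /\ q = (cos tq, sin tq) /\
    Rmin tp tq <= t <= Rmax tp tq /\ z = (cos t, sin t).

(* Suppose l_i < l_j and let q = gamma s0 be a point of gamma_i where u1 attains l_i.
   Since gamma (a_i) lies on A_i, it lies on A_j, strictly inside it by injectivity.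
   The sub-arc gamma_j is then a cross-cut of the disc (lemma crosscut): a path that
   starts in the disc close to a point strictly inside A_j and ends outside the closed
   disc must meet gamma_j or A_j.  But there is such a path avoiding both: follow gamma
   from just after a_i to q (disjoint from gamma_j, inside the open disc), then escape
   inside the sublevel set {u1 <= u1 q} together with P (escape_path: rotate to the
   negative axis, then move left).  It misses gamma_j because u1 > l_i there and
   P is not on gamma, and it misses A_j because A_j avoids the negative axis.

   The cross-cut lemma is proved with winding numbers, computed discretely: for a loop
   sampled finely relative to its distance to a point w, the sum of the angles of the
   edges seen from w is a multiple of 2 PI depending continuously on w, hence constant
   along paths avoiding the loop, and it vanishes when a ray from w avoids the loop.
   The loop "gamma_j, then A_j backwards" then does not wind around a point near the
   boundary (it can be joined to the far end of the path), nor does the loop "gamma_j,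
   then the complementary arc" (an outward ray escapes); their difference is the
   unit circle, winding by +-2 PI. *)

From Stdlib Require Import Reals Lra Lia Psatz ClassicalEpsilon.
From Coquelicot Require Import Coquelicot.
Open Scope R_scope.

Definition sq (p : pt) : R := fst p ^ 2 + snd p ^ 2.
Definition psub (p q : pt) : pt := (fst p - fst q, snd p - snd q).
Definition dst (p q : pt) : R := nrm (psub p q).

Lemma sq_ge0 p : 0 <= sq p.
Proof. unfold sq; nra. Qed.

Lemma nrm_ge0 p : 0 <= nrm p.
Proof. unfold nrm; apply sqrt_pos. Qed.

Lemma nrm_sq p : nrm p * nrm p = sq p.
Proof. unfold nrm; rewrite sqrt_sqrt; [reflexivity | apply sq_ge0]. Qed.

Lemma nrm_abs_fst p : Rabs (fst p) <= nrm p.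
Proof.
  pose proof (nrm_sq p); pose proof (nrm_ge0 p); unfold sq in *.
  unfold Rabs; destruct Rcase_abs; nra.
Qed.

Lemma nrm_le_of_sq p a : 0 <= a -> sq p <= a * a -> nrm p <= a.
Proof. intros Ha H. pose proof (nrm_sq p); pose proof (nrm_ge0 p). nra. Qed.

Lemma nrm_tri a b : nrm (fst a + fst b, snd a + snd b) <= nrm a + nrm b.
Proof.
  pose proof (nrm_sq a) as Ha; pose proof (nrm_sq b) as Hb.
  pose proof (nrm_ge0 a); pose proof (nrm_ge0 b).
  apply nrm_le_of_sq; [lra|]. unfold sq in *; simpl.
  assert (Hcs : fst a * fst b + snd a * snd b <= nrm a * nrm b).
  { assert ((fst a * fst b + snd a * snd b) ^ 2 <= (nrm a * nrm b) ^ 2).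
    { replace ((nrm a * nrm b) ^ 2) with ((nrm a * nrm a) * (nrm b * nrm b)) by ring.
      rewrite Ha, Hb. pose proof (pow2_ge_0 (fst a * snd b - snd a * fst b)). nra. }
    assert (0 <= nrm a * nrm b) by (apply Rmult_le_pos; lra). nra. }
  nra.
Qed.

Lemma dst_sym p q : dst p q = dst q p.
Proof. unfold dst, nrm, psub; simpl. f_equal; ring. Qed.

Lemma dst_tri p q r : dst p r <= dst p q + dst q r.
Proof.
  unfold dst.
  replace (psub p r) with (fst (psub p q) + fst (psub q r), snd (psub p q) + snd (psub q r))
    by (unfold psub; simpl; f_equal; ring).
  apply nrm_tri.
Qed.

Lemma dst_sq p q : dst p q * dst p q = (fst p - fst q) ^ 2 + (snd p - snd q) ^ 2.
Proof. unfold dst. rewrite nrm_sq. reflexivity. Qed.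

Lemma dst_ge0 p q : 0 <= dst p q.
Proof. apply nrm_ge0. Qed.

Lemma dst_eq0 p q : dst p q = 0 -> p = q.
Proof.
  intros H. pose proof (dst_sq p q) as E. rewrite H in E.
  destruct p as [x1 y1], q as [x2 y2]; simpl in *.
  pose proof (pow2_ge_0 (x1 - x2)); pose proof (pow2_ge_0 (y1 - y2)).
  f_equal; nra.
Qed.

Lemma dst_le_abs p q : dst p q <= Rabs (fst p - fst q) + Rabs (snd p - snd q).
Proof.
  pose proof (Rabs_pos (fst p - fst q)); pose proof (Rabs_pos (snd p - snd q)).
  apply nrm_le_of_sq; [lra|]. unfold sq, psub; cbn [fst snd].
  rewrite <- (pow2_abs (fst p - fst q)), <- (pow2_abs (snd p - snd q)). nra.
Qed.

Lemma dst_origin p : dst p (0, 0) = nrm p.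
Proof. unfold dst, psub; cbn [fst snd]. rewrite !Rminus_0_r. destruct p; reflexivity. Qed.

Lemma nrm_le_dst p q : nrm p <= nrm q + dst p q.
Proof. rewrite <- !dst_origin. pose proof (dst_tri p q (0, 0)). lra. Qed.

Lemma nrm_scale l p : 0 <= l -> nrm (l * fst p, l * snd p) = l * nrm p.
Proof.
  intros Hl. unfold nrm; cbn [fst snd].
  replace ((l * fst p) ^ 2 + (l * snd p) ^ 2) with (l ^ 2 * (fst p ^ 2 + snd p ^ 2)) by ring.
  rewrite sqrt_mult_alt by apply pow2_ge_0. rewrite sqrt_pow2 by lra. reflexivity.
Qed.

Lemma dst_scale2 l m (p : pt) :
  m <= l -> dst (l * fst p, l * snd p) (m * fst p, m * snd p) = (l - m) * nrm p.
Proof.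
  intros H. unfold dst, psub; cbn [fst snd].
  replace (l * fst p - m * fst p, l * snd p - m * snd p) with ((l - m) * fst p, (l - m) * snd p)
    by (f_equal; ring).
  apply nrm_scale. lra.
Qed.

Lemma nrm_unit t : nrm (cos t, sin t) = 1.
Proof.
  unfold nrm; cbn [fst snd].
  replace (cos t ^ 2 + sin t ^ 2) with 1 by (rewrite <- (sin2_cos2 t); unfold Rsqr; ring).
  apply sqrt_1.
Qed.

Lemma nrm_polar r th : 0 <= r -> nrm (r * cos th, r * sin th) = r.
Proof.
  intros H. pose proof (nrm_scale r (cos th, sin th) H) as E. cbn [fst snd] in E.
  rewrite E, nrm_unit. ring.
Qed.

Lemma nrm_x0 x : nrm (x, 0) = Rabs x.
Proof.
  unfold nrm; cbn [fst snd]. replace (x ^ 2 + 0 ^ 2) with (x²) by (unfold Rsqr; ring).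
  apply sqrt_Rsqr_abs.
Qed.

(** The angle function.  For z off the closed negative half-axis ("off the cut"),
    ang z is the argument of z in (-PI, PI), by the half-angle formula. *)

Definition offcut (z : pt) : Prop := 0 < nrm z + fst z.
Definition ang (z : pt) : R := 2 * atan (snd z / (nrm z + fst z)).

Lemma offcut_nrm_pos z : offcut z -> 0 < nrm z.
Proof.
  unfold offcut; intros H. pose proof (nrm_abs_fst z). pose proof (Rle_abs (fst z)).
  lra.
Qed.

Lemma offcut_of z : ~ (snd z = 0 /\ fst z <= 0) -> offcut z.
Proof.
  intros H. unfold offcut. pose proof (nrm_sq z) as Hq. pose proof (nrm_ge0 z). unfold sq in Hq.
  destruct (Req_dec (snd z) 0) as [Hy|Hy].
  - assert (fst z > 0) by (destruct (Rle_dec (fst z) 0); [exfalso; tauto | lra]). lra.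
  - assert (0 < snd z ^ 2) by (apply pow2_gt_0; auto).
    destruct (Rle_dec 0 (fst z)); [nra|]. assert (nrm z > - fst z) by nra. lra.
Qed.

Lemma ang_cos_sin z :
  offcut z -> cos (ang z) * nrm z = fst z /\ sin (ang z) * nrm z = snd z.
Proof.
  intros H. pose proof (offcut_nrm_pos z H) as Hr. unfold offcut in H.
  pose proof (nrm_sq z) as Hs. unfold sq in Hs.
  set (r := nrm z) in *. set (x := fst z) in *. set (y := snd z) in *.
  unfold ang. fold r x y. set (T := y / (r + x)).
  rewrite cos_2a_cos, sin_2a, cos_atan, sin_atan.
  assert (H1 : 0 < 1 + T ^ 2) by nra.
  assert (Hq : sqrt (1 + T²) * sqrt (1 + T²) = 1 + T ^ 2)
    by (rewrite sqrt_sqrt; unfold Rsqr; [ring | nra]).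
  assert (Hq2 : sqrt (1 + T²) ^ 2 = 1 + T ^ 2) by (rewrite <- Hq; ring).
  assert (Hp : 0 < sqrt (1 + T²)) by (apply sqrt_lt_R0; unfold Rsqr; nra).
  assert (HT : T * (r + x) = y) by (unfold T; field; lra).
  assert (Hyy : y * y = (T * (r + x)) * (T * (r + x))) by (rewrite HT; ring).
  assert (K : T ^ 2 * (r + x) = r - x) by (apply (Rmult_eq_reg_l (r + x)); [nra | lra]).
  split.
  - assert (E : 2 * (1 / sqrt (1 + T²)) * (1 / sqrt (1 + T²)) - 1 = (1 - T ^ 2) / (1 + T ^ 2)).
    { field_simplify; [| lra | lra]. rewrite Hq2. field. lra. }
    rewrite E.
    apply (Rmult_eq_reg_r ((1 + T ^ 2) * (r + x))); [| nra].
    field_simplify; [| lra].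
    assert ((r + x) * (T ^ 2 * (r + x)) = (r + x) * (r - x)) by (rewrite K; ring). nra.
  - assert (E : 2 * (T / sqrt (1 + T²)) * (1 / sqrt (1 + T²)) = 2 * T / (1 + T ^ 2)).
    { field_simplify; [| lra | lra]. rewrite Hq2. field. lra. }
    rewrite E.
    apply (Rmult_eq_reg_r ((1 + T ^ 2) * (r + x))); [| nra].
    field_simplify; [| lra].
    assert (T * (r + x) * (T ^ 2 * (r + x)) = T * (r + x) * (r - x)) by (rewrite K; ring).
    rewrite <- HT. nra.
Qed.

Lemma ang_bound z : - PI < ang z < PI.
Proof. unfold ang. pose proof (atan_bound (snd z / (nrm z + fst z))). lra. Qed.

Lemma cos1_0 x : cos x = 1 -> -2 * PI < x < 2 * PI -> x = 0.
Proof.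
  intros H [H1 H2]. pose proof PI_RGT_0.
  destruct (Rtotal_order x 0) as [Hn | [Hz | Hp]]; auto.
  - destruct (Rle_dec (- PI) x).
    + assert (- x = 0); [apply cos_inj; try lra; rewrite cos_neg, H, cos_0; reflexivity | lra].
    + assert (2 * PI + x = 0); [| lra]. apply cos_inj; try lra.
      rewrite cos_plus, cos_2PI, sin_2PI, H, cos_0. ring.
  - destruct (Rle_dec x PI).
    + apply cos_inj; try lra. rewrite H, cos_0. reflexivity.
    + assert (2 * PI - x = 0); [| lra]. apply cos_inj; try lra.
      rewrite cos_minus, cos_2PI, sin_2PI, H, cos_0. ring.
Qed.

Lemma cos1_3 x : cos x = 1 -> -4 * PI < x < 4 * PI -> x = -2 * PI \/ x = 0 \/ x = 2 * PI.
Proof.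
  intros H Hr. pose proof PI_RGT_0.
  destruct (Rlt_dec x (-2 * PI)).
  - left. assert (x + 2 * PI = 0); [| lra]. apply cos1_0; [| lra].
    rewrite cos_plus, cos_2PI, sin_2PI, H. ring.
  - destruct (Rgt_dec x (2 * PI)).
    + right; right. assert (x - 2 * PI = 0); [| lra]. apply cos1_0; [| lra].
      rewrite cos_minus, cos_2PI, sin_2PI, H. ring.
    + destruct (Req_dec x (-2 * PI)); [left; auto |].
      destruct (Req_dec x (2 * PI)); [right; right; auto |].
      right; left. apply cos1_0; auto; lra.
Qed.

Lemma cos_gt_m1 t : -PI < t < PI -> -1 < cos t.
Proof.
  intros Ht. pose proof (COS_bound t). destruct (Req_dec (cos t) (-1)) as [E|]; [| lra].
  exfalso. destruct (Rle_dec 0 t).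
  - assert (t - PI = 0); [| lra]. apply cos1_0; [| lra].
    rewrite cos_minus, cos_PI, sin_PI, E. ring.
  - assert (t + PI = 0); [| lra]. apply cos1_0; [| lra].
    rewrite cos_plus, cos_PI, sin_PI, E. ring.
Qed.

Lemma ang_unit t : -PI < t < PI -> ang (cos t, sin t) = t.
Proof.
  intros Ht.
  assert (Ho : offcut (cos t, sin t)) by (unfold offcut; rewrite nrm_unit; simpl; pose proof (cos_gt_m1 t Ht); lra).
  destruct (ang_cos_sin _ Ho) as [Hc Hs]. rewrite nrm_unit in Hc, Hs. cbn [fst snd] in Hc, Hs.
  assert (cos (ang (cos t, sin t) - t) = 1).
  { rewrite cos_minus. rewrite Rmult_1_r in Hc, Hs. rewrite Hc, Hs.
    pose proof (sin2_cos2 t). unfold Rsqr in *. lra. }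
  pose proof (ang_bound (cos t, sin t)). assert (ang (cos t, sin t) - t = 0); [| lra].
  apply cos1_0; auto; lra.
Qed.

Lemma ang_conj z : offcut z -> ang (fst z, - snd z) = - ang z.
Proof.
  intros Hz. unfold ang; simpl.
  replace (nrm (fst z, - snd z)) with (nrm z) by (unfold nrm; simpl; f_equal; ring).
  replace (- snd z / (nrm z + fst z)) with (- (snd z / (nrm z + fst z))) by (unfold Rdiv; ring).
  rewrite atan_opp. ring.
Qed.

Lemma ang_sign_pos z : offcut z -> PI / 2 < ang z -> fst z < 0 /\ 0 < snd z.
Proof.
  intros Ho Ha. destruct (ang_cos_sin z Ho) as [Hc Hs]. pose proof (offcut_nrm_pos z Ho).
  pose proof (ang_bound z).
  assert (cos (ang z) < 0) by (apply cos_lt_0; lra).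
  assert (0 < sin (ang z)) by (apply sin_gt_0; lra). nra.
Qed.

Lemma ang_sign_neg z : offcut z -> ang z < - (PI / 2) -> fst z < 0 /\ snd z < 0.
Proof.
  intros Ho Ha. destruct (ang_cos_sin z Ho) as [Hc Hs]. pose proof (offcut_nrm_pos z Ho).
  pose proof (ang_bound z).
  assert (cos (ang z) < 0) by (rewrite <- cos_neg; apply cos_lt_0; lra).
  assert (0 < sin (- ang z)) by (apply sin_gt_0; lra). rewrite sin_neg in *. nra.
Qed.

Lemma ang_cos_pos z : offcut z -> 0 < fst z -> - (PI / 2) < ang z < PI / 2.
Proof.
  intros Ho Hx. destruct (ang_cos_sin z Ho) as [Hc Hs]. pose proof (offcut_nrm_pos z Ho).
  pose proof (ang_bound z). pose proof PI_RGT_0.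
  assert (Hcos : 0 < cos (ang z)) by nra.
  split; destruct (Rle_dec (ang z) 0).
  - destruct (Rlt_dec (- (PI / 2)) (ang z)); auto.
    rewrite <- cos_neg in Hcos. pose proof (cos_le_0 (- ang z) ltac:(lra) ltac:(lra)). lra.
  - lra.
  - lra.
  - destruct (Rlt_dec (ang z) (PI / 2)); auto.
    pose proof (cos_le_0 (ang z) ltac:(lra) ltac:(lra)). lra.
Qed.

Lemma polar x :
  0 < nrm x -> exists th, 0 <= th <= 2 * PI /\ x = (nrm x * cos th, nrm x * sin th).
Proof.
  intros Hr. pose proof PI_RGT_0.
  destruct (Rlt_dec 0 (nrm x + fst x)) as [Ho | Ho].
  - destruct (ang_cos_sin x Ho) as [Hc Hs]. pose proof (ang_bound x).
    destruct (Rle_dec 0 (ang x)).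
    + exists (ang x). split; [lra |]. destruct x; cbn [fst snd] in *. f_equal; lra.
    + exists (ang x + 2 * PI). split; [lra |].
      rewrite cos_plus, sin_plus, cos_2PI, sin_2PI. destruct x; cbn [fst snd] in *. f_equal; lra.
  - pose proof (nrm_abs_fst x) as Ha. pose proof (nrm_sq x) as Hq. unfold sq in Hq.
    assert (E1 : fst x = - nrm x) by (unfold Rabs in Ha; destruct Rcase_abs; lra).
    assert (E2 : snd x = 0) by (rewrite E1 in Hq; nra).
    exists PI. split; [lra |]. rewrite cos_PI, sin_PI. destruct x; cbn [fst snd] in *. f_equal; lra.
Qed.

Lemma circle_polar p : nrm p = 1 -> p <> Ppt -> exists t, -PI < t < PI /\ p = (cos t, sin t).
Proof.
  intros H1 H2. pose proof (nrm_abs_fst p) as Ha. rewrite H1 in Ha.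
  assert (Ho : offcut p).
  { unfold offcut. rewrite H1.
    destruct (Req_dec (fst p) (-1)) as [E|]; [| unfold Rabs in Ha; destruct Rcase_abs; lra].
    exfalso. apply H2. pose proof (nrm_sq p) as Hq. rewrite H1 in Hq. unfold sq in Hq.
    rewrite E in Hq. destruct p; cbn [fst snd] in *. unfold Ppt. f_equal; nra. }
  exists (ang p). split; [pose proof (ang_bound p); lra |].
  destruct (ang_cos_sin p Ho) as [Hc Hs]. rewrite H1 in Hc, Hs.
  destruct p; cbn [fst snd] in *. f_equal; lra.
Qed.

(** Continuity.  C1 f: f is continuous on R; a plane path is continuous when both
    coordinates are.  Paths on [0,1] are extended to R by clamping the parameter. *)

Definition C1 (f : R -> R) : Prop := forall x, continuity_pt f x.
Definition pc (p : R -> pt) : Prop := C1 (fun s => fst (p s)) /\ C1 (fun s => snd (p s)).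

Lemma C1_plus f g : C1 f -> C1 g -> C1 (fun x => f x + g x).
Proof. intros Hf Hg x. exact (continuity_pt_plus f g x (Hf x) (Hg x)). Qed.
Lemma C1_minus f g : C1 f -> C1 g -> C1 (fun x => f x - g x).
Proof. intros Hf Hg x. exact (continuity_pt_minus f g x (Hf x) (Hg x)). Qed.
Lemma C1_mult f g : C1 f -> C1 g -> C1 (fun x => f x * g x).
Proof. intros Hf Hg x. exact (continuity_pt_mult f g x (Hf x) (Hg x)). Qed.
Lemma C1_const c : C1 (fun _ => c).
Proof. intros x. apply continuity_pt_const. intros a b; reflexivity. Qed.
Lemma C1_id : C1 (fun x => x).
Proof. intros x. apply derivable_continuous_pt, derivable_pt_id. Qed.
Lemma C1_comp f g : C1 f -> C1 g -> C1 (fun x => g (f x)).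
Proof. intros Hf Hg x. exact (continuity_pt_comp f g x (Hf x) (Hg (f x))). Qed.
Lemma C1_div f g : C1 f -> C1 g -> (forall x, g x <> 0) -> C1 (fun x => f x / g x).
Proof. intros Hf Hg Hn x. exact (continuity_pt_div f g x (Hf x) (Hg x) (Hn x)). Qed.
Lemma C1_sqrt f : C1 f -> (forall x, 0 <= f x) -> C1 (fun x => sqrt (f x)).
Proof. intros Hf Hp x. apply (continuity_pt_comp f sqrt x (Hf x)), continuity_pt_sqrt. auto. Qed.
Lemma C1_atan f : C1 f -> C1 (fun x => atan (f x)).
Proof. intros Hf. apply (C1_comp f atan Hf). intros y. apply derivable_continuous_pt, derivable_pt_atan. Qed.
Lemma C1_cos f : C1 f -> C1 (fun x => cos (f x)).
Proof. intros Hf. apply (C1_comp f cos Hf). intros y. apply continuity_cos. Qed.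
Lemma C1_sin f : C1 f -> C1 (fun x => sin (f x)).
Proof. intros Hf. apply (C1_comp f sin Hf). intros y. apply continuity_sin. Qed.
Lemma C1_abs f : C1 f -> C1 (fun x => Rabs (f x)).
Proof. intros Hf. apply (C1_comp f Rabs Hf). intros y. apply Rcontinuity_abs. Qed.
Lemma C1_pow2 f : C1 f -> C1 (fun x => f x ^ 2).
Proof.
  intros Hf. apply (C1_comp f (fun y => y ^ 2) Hf). intros y.
  apply derivable_continuous_pt, derivable_pt_pow.
Qed.
Lemma C1_affine c e : C1 (fun s => c + s * e).
Proof. apply C1_plus; [apply C1_const | apply C1_mult; [apply C1_id | apply C1_const]]. Qed.

Lemma pc_comp (h : R -> R) (p : R -> pt) : C1 h -> pc p -> pc (fun s => p (h s)).
Proof. intros Hh [H1 H2]. split; apply (C1_comp h (fun t => _ (p t))); auto. Qed.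

Lemma pc_const (p : pt) : pc (fun _ => p).
Proof. split; apply C1_const. Qed.

Lemma C1_nrm p : pc p -> C1 (fun s => nrm (p s)).
Proof.
  intros [H1 H2]. unfold nrm. apply C1_sqrt; [apply C1_plus; apply C1_pow2; auto |].
  intros x. exact (sq_ge0 (p x)).
Qed.

Lemma C1_dst_r p (g : R -> pt) : pc g -> C1 (fun t => dst p (g t)).
Proof.
  intros [H1 H2]. unfold dst. apply (C1_nrm (fun t => psub p (g t))).
  unfold psub; split; cbn [fst snd]; apply C1_minus; auto; apply C1_const.
Qed.

Lemma C1_ang Z : pc Z -> (forall s, offcut (Z s)) -> C1 (fun s => ang (Z s)).
Proof.
  intros HZ Ho. unfold ang. apply C1_mult; [apply C1_const |]. apply C1_atan.
  apply C1_div; [apply HZ | apply C1_plus; [apply C1_nrm; auto | apply HZ] |].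
  intros x. specialize (Ho x). unfold offcut in Ho. lra.
Qed.

(* clamp s = max 0 (min s 1), written with absolute values to make continuity evident. *)
Definition clamp (s : R) : R := let m := (1 + s - Rabs (1 - s)) / 2 in (m + Rabs m) / 2.

Lemma clamp_C1 : C1 clamp.
Proof.
  assert (Hm : C1 (fun s => (1 + s - Rabs (1 - s)) / 2)).
  { apply C1_div; [| apply C1_const | intros; lra].
    apply C1_minus; [apply C1_plus; [apply C1_const | apply C1_id] |].
    apply C1_abs, C1_minus; [apply C1_const | apply C1_id]. }
  unfold clamp. apply C1_div; [| apply C1_const | intros; lra].
  apply C1_plus; [exact Hm | apply C1_abs, Hm].
Qed.

Lemma clamp_range s : 0 <= clamp s <= 1.
Proof. unfold clamp. cbv zeta. unfold Rabs. repeat destruct Rcase_abs; lra. Qed.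

Lemma clamp_id s : 0 <= s <= 1 -> clamp s = s.
Proof. intros H. unfold clamp. cbv zeta. unfold Rabs. repeat destruct Rcase_abs; lra. Qed.

Lemma clamp_lip x y : Rabs (clamp y - clamp x) <= Rabs (y - x).
Proof. unfold clamp. cbv zeta. unfold Rabs. repeat destruct Rcase_abs; lra. Qed.

Lemma clamped_pc (f : R -> pt) :
  (forall t, 0 <= t <= 1 ->
     filterlim f (within (fun s => 0 <= s <= 1) (locally t)) (locally (f t))) ->
  pc (fun t => f (clamp t)).
Proof.
  intros Hc.
  assert (Hpt : forall x eps, 0 < eps -> exists del, 0 < del /\ forall y, Rabs (y - x) < del ->
    Rabs (fst (f (clamp y)) - fst (f (clamp x))) < eps /\
    Rabs (snd (f (clamp y)) - snd (f (clamp x))) < eps).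
  { intros x eps He.
    destruct (proj1 (filterlim_locally (F := within (fun s => 0 <= s <= 1) (locally (clamp x)))
                f (f (clamp x))) (Hc _ (clamp_range x)) (mkposreal eps He)) as [del Hd].
    exists del. split; [apply cond_pos |]. intros y Hy.
    assert (Hb : ball (clamp x) del (clamp y)).
    { unfold ball; simpl. unfold AbsRing_ball, abs, minus, plus, opp; simpl.
      replace (clamp y + - clamp x) with (clamp y - clamp x) by ring.
      pose proof (clamp_lip x y). lra. }
    specialize (Hd _ Hb (clamp_range y)).
    destruct (f (clamp x)), (f (clamp y)).
    unfold ball in Hd; simpl in Hd. unfold prod_ball, AbsRing_ball, abs, minus, plus, opp in Hd.
    exact Hd. }
  split; intros x; unfold continuity_pt, continue_in, limit1_in, limit_in; simpl;
    intros eps He; destruct (Hpt x eps He) as [del [Hd Hdd]]; exists del; split; auto;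
    intros y [_ Hy]; unfold Rdist in *; apply Hdd; auto.
Qed.

(** Concatenation of two paths on [0,1]: first f at double speed, then g.
    Written as a sum so that continuity is immediate. *)
Definition pcat (f g : R -> pt) (s : R) : pt :=
  (fst (f (clamp (2 * s))) + fst (g (clamp (2 * s - 1))) - fst (g 0),
   snd (f (clamp (2 * s))) + snd (g (clamp (2 * s - 1))) - snd (g 0)).

Lemma pcat_pc f g : pc f -> pc g -> pc (pcat f g).
Proof.
  intros Hf Hg.
  destruct (pc_comp (fun s => clamp (2 * s)) f) as [F1 F2];
    [apply (C1_comp (fun s => 2 * s)); [apply C1_mult; [apply C1_const | apply C1_id] | apply clamp_C1] | auto |].
  destruct (pc_comp (fun s => clamp (2 * s - 1)) g) as [G1 G2];
    [apply (C1_comp (fun s => 2 * s - 1));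
       [apply C1_minus; [apply C1_mult; [apply C1_const | apply C1_id] | apply C1_const] | apply clamp_C1]
    | auto |].
  unfold pcat; split; cbn [fst snd]; apply C1_minus; try apply C1_const; apply C1_plus; auto.
Qed.

Lemma pcat_lo f g s : 0 <= s <= 1 / 2 -> pcat f g s = f (2 * s).
Proof.
  intros Hs. unfold pcat. rewrite (clamp_id (2 * s)) by lra.
  assert (E : clamp (2 * s - 1) = 0) by (unfold clamp; cbv zeta; unfold Rabs; repeat destruct Rcase_abs; lra).
  rewrite E. destruct (f (2 * s)); cbn [fst snd]. f_equal; ring.
Qed.

Lemma pcat_hi f g s : f 1 = g 0 -> 1 / 2 <= s <= 1 -> pcat f g s = g (2 * s - 1).
Proof.
  intros Hfg Hs. unfold pcat. rewrite (clamp_id (2 * s - 1)) by lra.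
  assert (E : clamp (2 * s) = 1) by (unfold clamp; cbv zeta; unfold Rabs; repeat destruct Rcase_abs; lra).
  rewrite E, Hfg. destruct (g (2 * s - 1)); cbn [fst snd]. f_equal; ring.
Qed.

Lemma pcat_cases f g s : f 1 = g 0 -> 0 <= s <= 1 ->
  exists t, 0 <= t <= 1 /\ (pcat f g s = f t \/ pcat f g s = g t).
Proof.
  intros Hfg Hs. destruct (Rle_dec s (1 / 2)).
  - exists (2 * s). split; [lra |]. left. apply pcat_lo. lra.
  - exists (2 * s - 1). split; [lra |]. right. apply pcat_hi; auto. lra.
Qed.

(** A continuous function whose values all satisfy cos = 1 is constant: its values
    lie in the discrete set 2 PI Z. *)
Lemma cos1_sin0 x : cos x = 1 -> sin x = 0.
Proof. intros H. pose proof (sin2_cos2 x) as E. rewrite H in E. unfold Rsqr in E. nra. Qed.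

Lemma cos1_no_increase g : C1 g -> (forall s, 0 <= s <= 1 -> cos (g s) = 1) -> ~ g 0 < g 1.
Proof.
  intros Hg Hc Hl. pose proof PI_RGT_0.
  set (h := Rmin (g 1 - g 0) PI).
  assert (Hh : 0 < h <= PI) by (unfold h, Rmin; destruct Rle_dec; lra).
  assert (Hh2 : h <= g 1 - g 0) by apply Rmin_l.
  destruct (IVT_cor (fun s => g s - (g 0 + h)) 0 1) as [z [Hz Hgz]].
  { intros x. apply (C1_minus g (fun _ => g 0 + h) Hg (C1_const _)). }
  { lra. }
  { nra. }
  assert (cos h = 1).
  { replace h with (g z - g 0) by lra.
    rewrite cos_minus, (Hc z Hz), (Hc 0 ltac:(lra)), (cos1_sin0 _ (Hc 0 ltac:(lra))). ring. }
  assert (h = 0) by (apply cos1_0; auto; lra). lra.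
Qed.

Lemma cos1_const g : C1 g -> (forall s, 0 <= s <= 1 -> cos (g s) = 1) -> g 0 = g 1.
Proof.
  intros Hg Hc.
  assert (Hopp : C1 (fun s => - g s)) by (intros x; apply continuity_pt_opp, Hg).
  pose proof (cos1_no_increase g Hg Hc) as Hup.
  pose proof (cos1_no_increase (fun s => - g s) Hopp) as Hdown.
  cbv beta in Hdown. assert (~ - g 0 < - g 1) by (apply Hdown; intros s Hs; rewrite cos_neg; auto).
  lra.
Qed.

(** Discrete winding sums.  The angle of an edge is
    computed as the argument of the quotient (v (k+1) - w) / (v k - w), read in (-PI, PI);
    this is the true turning angle as long as the edge is short compared with its
    distance to w ("valid" edge). *)

Fixpoint sumw (f : nat -> R) (n : nat) : R :=
  match n with O => 0 | S m => sumw f m + f m end.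

(* rat p q = q * conj p, the quotient q / p up to the positive factor |p|^2. *)
Definition rat (p q : pt) : pt :=
  (fst q * fst p + snd q * snd p, snd q * fst p - fst q * snd p).
Definition stepang (w a b : pt) : R := ang (rat (psub a w) (psub b w)).
Definition ws (v : nat -> pt) (M : nat) (w : pt) : R :=
  sumw (fun k => stepang w (v k) (v (S k))) M.
Definition valid (w a b : pt) : Prop := dst b a < dst a w.

Lemma rat_nrm p q : nrm (rat p q) = nrm p * nrm q.
Proof.
  unfold nrm, rat; simpl. rewrite <- sqrt_mult by (apply (sq_ge0 p) || apply (sq_ge0 q)).
  f_equal. ring.
Qed.

Lemma valid_props w a b : valid w a b ->
  offcut (rat (psub a w) (psub b w)) /\ 0 < nrm (psub a w) /\ 0 < nrm (psub b w) /\
  0 < fst (rat (psub a w) (psub b w)).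
Proof.
  unfold valid, dst. intros H.
  pose proof (nrm_ge0 (psub b a)) as H0.
  assert (Ha : 0 < nrm (psub a w)) by lra.
  assert (Hb : nrm (psub a w) <= nrm (psub b a) + nrm (psub b w)).
  { pose proof (dst_tri a b w) as T. rewrite (dst_sym a b) in T. exact T. }
  assert (Hs : sq (psub b a) < sq (psub a w)).
  { rewrite <- !nrm_sq. nra. }
  assert (Hf : 0 < fst (rat (psub a w) (psub b w))).
  { unfold sq, rat, psub in *; simpl in *.
    pose proof (pow2_ge_0 (fst a - fst w + (fst b - fst a))).
    pose proof (pow2_ge_0 (snd a - snd w + (snd b - snd a))).
    nra. }
  pose proof (nrm_ge0 (rat (psub a w) (psub b w))).
  unfold offcut. repeat split; lra.
Qed.

Lemma ws_invariant v M w : (forall k, (k < M)%nat -> valid w (v k) (v (S k))) ->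
  forall n, (n <= M)%nat ->
  cos (ws v n w) * (nrm (psub (v n) w) * nrm (psub (v O) w)) = fst (rat (psub (v O) w) (psub (v n) w)) /\
  sin (ws v n w) * (nrm (psub (v n) w) * nrm (psub (v O) w)) = snd (rat (psub (v O) w) (psub (v n) w)).
Proof.
  intros Hv n. induction n as [|n IH]; intros Hn.
  - change (ws v 0 w) with 0. rewrite cos_0, sin_0, Rmult_1_l, Rmult_0_l, nrm_sq.
    unfold sq, rat; simpl. split; ring.
  - destruct (IH ltac:(lia)) as [Ic Is].
    destruct (valid_props _ _ _ (Hv n ltac:(lia))) as [Ho [Hpn _]].
    destruct (ang_cos_sin _ Ho) as [Ac As]. rewrite rat_nrm in Ac, As.
    change (ws v (S n) w) with (ws v n w + stepang w (v n) (v (S n))). unfold stepang.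
    set (a := ang (rat (psub (v n) w) (psub (v (S n)) w))) in *.
    set (S0 := ws v n w) in *.
    set (p0 := psub (v O) w) in *. set (pn := psub (v n) w) in *. set (pm := psub (v (S n)) w) in *.
    pose proof (nrm_sq pn) as Hq. unfold sq in Hq.
    rewrite cos_plus, sin_plus. split.
    + apply (Rmult_eq_reg_r (nrm pn * nrm pn)); [| nra].
      transitivity ((cos S0 * (nrm pn * nrm p0)) * (cos a * (nrm pn * nrm pm))
                    - (sin S0 * (nrm pn * nrm p0)) * (sin a * (nrm pn * nrm pm))); [ring |].
      rewrite Ic, Is, Ac, As, Hq. unfold rat; simpl; ring.
    + apply (Rmult_eq_reg_r (nrm pn * nrm pn)); [| nra].
      transitivity ((sin S0 * (nrm pn * nrm p0)) * (cos a * (nrm pn * nrm pm))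
                    + (cos S0 * (nrm pn * nrm p0)) * (sin a * (nrm pn * nrm pm))); [ring |].
      rewrite Ic, Is, Ac, As, Hq. unfold rat; simpl; ring.
Qed.

Lemma ws_closed v M w : (0 < M)%nat -> v M = v O ->
  (forall k, (k < M)%nat -> valid w (v k) (v (S k))) -> cos (ws v M w) = 1.
Proof.
  intros HM Hc Hv. destruct (ws_invariant v M w Hv M (le_n M)) as [Ic _].
  rewrite Hc, nrm_sq in Ic.
  destruct (valid_props _ _ _ (Hv O HM)) as [_ [Hp _]].
  pose proof (nrm_sq (psub (v O) w)) as Hq.
  apply (Rmult_eq_reg_r (sq (psub (v O) w))); [| rewrite <- Hq; nra].
  rewrite Ic. unfold sq, rat; simpl; ring.
Qed.

Lemma C1_stepang (w : R -> pt) a b : pc w -> (forall s, valid (w s) a b) ->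
  C1 (fun s => stepang (w s) a b).
Proof.
  intros [H1 H2] Hv. unfold stepang. apply C1_ang.
  - unfold rat, psub; split; simpl.
    + apply C1_plus; apply C1_mult; (apply C1_minus; [apply C1_const | auto]).
    + apply C1_minus; apply C1_mult; (apply C1_minus; [apply C1_const | auto]).
  - intros s. apply (valid_props _ _ _ (Hv s)).
Qed.

Lemma ws_path v M (w : R -> pt) : (0 < M)%nat -> v M = v O -> pc w ->
  (forall s, 0 <= s <= 1 -> forall k, (k < M)%nat -> valid (w s) (v k) (v (S k))) ->
  ws v M (w 0) = ws v M (w 1).
Proof.
  intros HM Hc Hw Hv.
  set (wc := fun s => w (clamp s)).
  assert (Hwc : pc wc) by exact (pc_comp clamp w clamp_C1 Hw).
  assert (Hvc : forall s k, (k < M)%nat -> valid (wc s) (v k) (v (S k)))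
    by (intros s k Hk; apply Hv; auto; apply clamp_range).
  assert (HC : forall n, (n <= M)%nat -> C1 (fun s => ws v n (wc s))).
  { induction n; intros Hn; unfold ws; simpl; [apply C1_const |].
    apply C1_plus; [apply IHn; lia |].
    apply C1_stepang; [auto | intros s; apply Hvc; lia]. }
  pose proof (cos1_const (fun s => ws v M (wc s)) (HC M (le_n M))) as K.
  unfold wc in K. rewrite (clamp_id 0), (clamp_id 1) in K by lra. apply K.
  intros s Hs. apply ws_closed; auto. intros k Hk. apply Hvc; auto.
Qed.

(** The cut argument: if no edge of a closed polygon meets the ray from w in the
    direction encoded by the unit vector u, all edge angles are differences of a
    single continuous branch of the argument, so the winding sum vanishes. *)

Definition cmul (p u : pt) : pt :=
  (fst p * fst u - snd p * snd u, fst p * snd u + snd p * fst u).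
Definition comb (l : R) (p q : pt) : pt :=
  ((1 - l) * fst p + l * fst q, (1 - l) * snd p + l * snd q).

Lemma cmul_nrm p u : nrm u = 1 -> nrm (cmul p u) = nrm p.
Proof.
  intros Hu. pose proof (nrm_sq u) as Hq. rewrite Hu in Hq. unfold sq in Hq.
  unfold nrm, cmul; cbn [fst snd]. f_equal.
  replace ((fst p * fst u - snd p * snd u) ^ 2 + (fst p * snd u + snd p * fst u) ^ 2)
    with ((fst p ^ 2 + snd p ^ 2) * (fst u ^ 2 + snd u ^ 2)) by ring.
  rewrite <- Hq. ring.
Qed.

Lemma cmul_comb l p q u : cmul (comb l p q) u = comb l (cmul p u) (cmul q u).
Proof. unfold cmul, comb; cbn [fst snd]; f_equal; ring. Qed.

Lemma cross_neg_axis (za zb : pt) : fst za < 0 -> fst zb < 0 -> snd za * snd zb < 0 ->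
  exists l, 0 <= l <= 1 /\ snd (comb l za zb) = 0 /\ fst (comb l za zb) <= 0.
Proof.
  intros Ha Hb Hy. destruct za as [xa ya], zb as [xb yb]; cbn [fst snd] in *.
  assert (Hd : ya - yb <> 0) by (intro; assert (ya = yb) by lra; subst; nra).
  assert (Hl : 0 <= ya / (ya - yb) <= 1).
  { destruct (Rlt_dec 0 ya).
    - assert (yb < 0) by nra. split; [apply Rdiv_le_0_compat; lra |].
      apply (Rmult_le_reg_r (ya - yb)); [lra |]. unfold Rdiv; rewrite Rmult_assoc, Rinv_l; lra.
    - assert (ya < 0) by (destruct (Req_dec ya 0); [subst; nra | lra]). assert (0 < yb) by nra.
      replace (ya / (ya - yb)) with ((- ya) / (yb - ya)) by (field; lra).
      split; [apply Rdiv_le_0_compat; lra |].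
      apply (Rmult_le_reg_r (yb - ya)); [lra |]. unfold Rdiv; rewrite Rmult_assoc, Rinv_l; lra. }
  exists (ya / (ya - yb)). unfold comb; cbn [fst snd]. split; [auto | split; [field; auto | nra]].
Qed.

Definition crosses_cut (u p q : pt) : Prop :=
  exists l, 0 <= l <= 1 /\ snd (cmul (comb l p q) u) = 0 /\ fst (cmul (comb l p q) u) <= 0.

Lemma cut_step w a b u : nrm u = 1 -> valid w a b -> ~ crosses_cut u (psub a w) (psub b w) ->
  stepang w a b = ang (cmul (psub b w) u) - ang (cmul (psub a w) u).
Proof.
  intros Hu Hv Hseg. pose proof PI_RGT_0.
  set (pa := psub a w) in *. set (pb := psub b w) in *.
  assert (Oa : offcut (cmul pa u)).
  { apply offcut_of. intros [H1 H2]. apply Hseg. exists 0. unfold comb.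
    destruct pa; cbn [fst snd] in *. rewrite !Rminus_0_r, !Rmult_1_l, !Rmult_0_l, !Rplus_0_r. lra. }
  assert (Ob : offcut (cmul pb u)).
  { apply offcut_of. intros [H1 H2]. apply Hseg. exists 1. unfold comb.
    destruct pb; cbn [fst snd] in *. rewrite !Rminus_diag_eq, !Rmult_1_l, !Rmult_0_l, !Rplus_0_l by reflexivity. lra. }
  destruct (valid_props w a b Hv) as [Or [Hpa [Hpb Hpos]]]. fold pa pb in Or, Hpa, Hpb, Hpos.
  destruct (ang_cos_sin _ Oa) as [Ca Sa]. destruct (ang_cos_sin _ Ob) as [Cb Sb].
  destruct (ang_cos_sin _ Or) as [Cr Sr].
  rewrite cmul_nrm in Ca, Sa, Cb, Sb by auto. rewrite rat_nrm in Cr, Sr.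
  pose proof (nrm_sq u) as Hq. rewrite Hu in Hq. unfold sq in Hq.
  unfold stepang. fold pa pb.
  set (A := ang (cmul pa u)) in *. set (B := ang (cmul pb u)) in *. set (Rr := ang (rat pa pb)) in *.
  assert (HR : - (PI / 2) < Rr < PI / 2) by (apply ang_cos_pos; auto).
  assert (Hpp : 0 < nrm pa * nrm pb) by (apply Rmult_lt_0_compat; lra).
  assert (Hc : cos (B - A - Rr) = 1).
  { rewrite cos_minus, cos_minus, sin_minus.
    apply (Rmult_eq_reg_r ((nrm pa * nrm pb) * (nrm pa * nrm pb) * (nrm pa * nrm pb)));
      [| apply Rgt_not_eq; repeat apply Rmult_lt_0_compat; lra].
    transitivity (((cos B * nrm pb) * (cos A * nrm pa) + (sin B * nrm pb) * (sin A * nrm pa))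
                    * (cos Rr * (nrm pa * nrm pb)) * (nrm pa * nrm pb)
      + ((sin B * nrm pb) * (cos A * nrm pa) - (cos B * nrm pb) * (sin A * nrm pa))
          * (sin Rr * (nrm pa * nrm pb)) * (nrm pa * nrm pb)); [ring |].
    rewrite Ca, Sa, Cb, Sb, Cr, Sr.
    pose proof (nrm_sq pa) as Qa. pose proof (nrm_sq pb) as Qb. unfold sq in Qa, Qb.
    transitivity ((fst u ^ 2 + snd u ^ 2) * ((fst pa ^ 2 + snd pa ^ 2) * (fst pb ^ 2 + snd pb ^ 2))
                  * (nrm pa * nrm pb)); [unfold cmul, rat; cbn [fst snd]; ring |].
    rewrite <- Hq, <- Qa, <- Qb; ring. }
  pose proof (ang_bound (cmul pa u)) as BA. pose proof (ang_bound (cmul pb u)) as BB. fold A in BA. fold B in BB.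
  (* A jump of 2 PI would force the segment to cross the negative axis. *)
  destruct (cos1_3 _ Hc ltac:(lra)) as [E | [E | E]]; [| lra |]; exfalso; apply Hseg.
  - destruct (ang_sign_pos _ Oa ltac:(fold A; lra)) as [xa ya].
    destruct (ang_sign_neg _ Ob ltac:(fold B; lra)) as [xb yb].
    destruct (cross_neg_axis (cmul pa u) (cmul pb u) xa xb ltac:(nra)) as [l [Hl Hl2]].
    exists l. rewrite cmul_comb. auto.
  - destruct (ang_sign_neg _ Oa ltac:(fold A; lra)) as [xa ya].
    destruct (ang_sign_pos _ Ob ltac:(fold B; lra)) as [xb yb].
    destruct (cross_neg_axis (cmul pa u) (cmul pb u) xa xb ltac:(nra)) as [l [Hl Hl2]].
    exists l. rewrite cmul_comb. auto.
Qed.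

Lemma ws_cut v M w u : nrm u = 1 -> v M = v O ->
  (forall k, (k < M)%nat -> valid w (v k) (v (S k))) ->
  (forall k, (k < M)%nat -> ~ crosses_cut u (psub (v k) w) (psub (v (S k)) w)) ->
  ws v M w = 0.
Proof.
  intros Hu Hc Hv Hs.
  assert (Htel : forall n, (n <= M)%nat ->
            ws v n w = ang (cmul (psub (v n) w) u) - ang (cmul (psub (v O) w) u)).
  { induction n; intros Hn; [change (ws v 0 w) with 0; ring |].
    change (ws v (S n) w) with (ws v n w + stepang w (v n) (v (S n))).
    rewrite IHn by lia. rewrite (cut_step w _ _ u); [ring | auto | auto | apply Hs; lia]. }
  rewrite Htel, Hc by lia. ring.
Qed.

(* The cut seen from w through u is the ray {(fst w - m fst u, snd w + m snd u) | m >= 0};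
   an edge staying at distance >= d from that ray, shorter than d, does not cross it. *)
Lemma cmul_axis z u : fst u ^ 2 + snd u ^ 2 = 1 -> snd (cmul z u) = 0 ->
  z = (fst (cmul z u) * fst u, - fst (cmul z u) * snd u).
Proof.
  destruct z as [zx zy], u as [ux uy]. unfold cmul; cbn [fst snd]. intros Hq H.
  assert (uy * (zx * uy + zy * ux) = 0) by (rewrite H; ring).
  assert (ux * (zx * uy + zy * ux) = 0) by (rewrite H; ring).
  assert (zx * (ux ^ 2 + uy ^ 2) = zx) by (rewrite Hq; ring).
  assert (zy * (ux ^ 2 + uy ^ 2) = zy) by (rewrite Hq; ring).
  f_equal; nra.
Qed.

Lemma no_cross_of_dist w a b u d : nrm u = 1 ->
  (forall m, 0 <= m -> d <= dst a (fst w - m * fst u, snd w + m * snd u)) -> dst b a < d ->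
  ~ crosses_cut u (psub a w) (psub b w).
Proof.
  intros Hu Hd Hb [l [Hl [H1 H2]]].
  pose proof (nrm_sq u) as Hq. rewrite Hu in Hq. unfold sq in Hq.
  set (z := comb l (psub a w) (psub b w)) in *.
  set (m := - fst (cmul z u)).
  assert (Ez : z = (- m * fst u, m * snd u)).
  { unfold m. rewrite (cmul_axis z u) at 1 by lra. f_equal; ring. }
  specialize (Hd m ltac:(unfold m; lra)).
  assert (E2 : (fst w - m * fst u, snd w + m * snd u)
               = ((1 - l) * fst a + l * fst b, (1 - l) * snd a + l * snd b)).
  { assert (fst z = - m * fst u) by (rewrite Ez; reflexivity).
    assert (snd z = m * snd u) by (rewrite Ez; reflexivity).
    unfold z, comb, psub in *; cbn [fst snd] in *. f_equal; lra. }
  assert (E3 : dst a (fst w - m * fst u, snd w + m * snd u) = l * dst b a).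
  { rewrite E2. unfold dst, nrm, psub; cbn [fst snd].
    match goal with |- sqrt ?X = _ =>
      replace X with (l ^ 2 * ((fst b - fst a) ^ 2 + (snd b - snd a) ^ 2)) by ring end.
    rewrite sqrt_mult_alt by apply pow2_ge_0. rewrite sqrt_pow2 by lra. reflexivity. }
  pose proof (dst_ge0 b a). nra.
Qed.

Definition cat (p q : nat -> pt) (N : nat) : nat -> pt :=
  fun k => if (k <=? N)%nat then p k else q (k - N)%nat.

Lemma sumw_split f N m : sumw f (N + m) = sumw f N + sumw (fun k => f (N + k)%nat) m.
Proof. induction m; [rewrite Nat.add_0_r; simpl; ring |]. rewrite Nat.add_succ_r. simpl. rewrite IHm. ring. Qed.

Lemma sumw_ext f g n : (forall k, (k < n)%nat -> f k = g k) -> sumw f n = sumw g n.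
Proof.
  induction n; intros H; simpl; [reflexivity |].
  rewrite IHn by (intros; apply H; lia). rewrite H by lia. reflexivity.
Qed.

Lemma cat_lo p q N k : (k <= N)%nat -> cat p q N k = p k.
Proof. intros H. unfold cat. destruct (Nat.leb_spec k N); [reflexivity | lia]. Qed.

Lemma cat_hi p q N k : p N = q O -> cat p q N (N + k) = q k.
Proof.
  intros H. unfold cat. destruct (Nat.leb_spec (N + k) N).
  - assert (k = O) by lia. subst. rewrite Nat.add_0_r. auto.
  - f_equal. lia.
Qed.

Lemma ws_cat p q N w : p N = q O -> ws (cat p q N) (N + N) w = ws p N w + ws q N w.
Proof.
  intros H. unfold ws. rewrite sumw_split. f_equal.
  - apply sumw_ext. intros k Hk. rewrite !cat_lo by lia. reflexivity.
  - apply sumw_ext. intros k Hk. rewrite <- Nat.add_succ_r, !cat_hi by auto. reflexivity.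
Qed.

Lemma step_cat (P : pt -> pt -> Prop) p q N : p N = q O ->
  (forall k, (k < N)%nat -> P (p k) (p (S k))) -> (forall k, (k < N)%nat -> P (q k) (q (S k))) ->
  forall k, (k < N + N)%nat -> P (cat p q N k) (cat p q N (S k)).
Proof.
  intros H Hp Hq k Hk. destruct (Nat.lt_ge_cases k N).
  - rewrite !cat_lo by lia. apply Hp; auto.
  - replace k with (N + (k - N))%nat by lia. rewrite <- Nat.add_succ_r, !cat_hi by auto. apply Hq; lia.
Qed.

Lemma sumw_rev f n : sumw (fun k => f (n - S k)%nat) n = sumw f n.
Proof.
  assert (Hshift : forall g m, sumw g (S m) = g O + sumw (fun k => g (S k)) m).
  { intros g m. induction m; [simpl; ring |].
    change (sumw g (S (S m))) with (sumw g (S m) + g (S m)). rewrite IHm. simpl. ring. }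
  induction n; [reflexivity |].
  rewrite Hshift. replace (S n - 1)%nat with n by lia.
  change (sumw (fun k => f (S n - S (S k))%nat) n) with (sumw (fun k => f (n - S k)%nat) n).
  rewrite IHn. simpl. ring.
Qed.

Lemma stepang_swap w a b : valid w a b -> stepang w b a = - stepang w a b.
Proof.
  intros Hv. destruct (valid_props w a b Hv) as [Ho _]. unfold stepang.
  rewrite <- ang_conj by auto. f_equal. unfold rat; cbn [fst snd]. f_equal; ring.
Qed.

Lemma ws_rev p N w : (forall k, (k < N)%nat -> valid w (p k) (p (S k))) ->
  ws (fun k => p (N - k)%nat) N w = - ws p N w.
Proof.
  intros Hv. unfold ws.
  transitivity (sumw (fun k => (fun m => - stepang w (p m) (p (S m))) (N - S k)%nat) N).
  - apply sumw_ext. intros k Hk. cbn beta. rewrite <- stepang_swap by (apply Hv; lia).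
    f_equal; f_equal; lia.
  - rewrite (sumw_rev (fun m => - stepang w (p m) (p (S m))) N). clear Hv.
    induction N; simpl; [ring |]. rewrite IHN. ring.
Qed.

Definition samp (f : R -> pt) (N k : nat) : pt := f (INR k / INR N).
Definition fine (f : R -> pt) (N : nat) (d : R) : Prop :=
  (0 < N)%nat /\ forall k, (k < N)%nat -> dst (samp f N (S k)) (samp f N k) < d.
Definition avoids (f : R -> pt) (z : pt) (d : R) : Prop :=
  forall s, 0 <= s <= 1 -> d <= dst (f s) z.
Definition wnd (f : R -> pt) (N : nat) (w : pt) : R := ws (samp f N) N w.

Definition loop (f g : R -> pt) : Prop := f 1 = g 0 /\ g 1 = f 0.
Definition wloop (f g : R -> pt) (N : nat) (w : pt) : R := wnd f N w + wnd g N w.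

Definition ray (w v : pt) (m : R) : pt := (fst w + m * fst v, snd w + m * snd v).
Definition rev (f : R -> pt) (s : R) : pt := f (1 - s).

Lemma samp_range N k : (0 < N)%nat -> (k <= N)%nat -> 0 <= INR k / INR N <= 1.
Proof.
  intros HN Hk. assert (0 < INR N) by (apply lt_0_INR; lia).
  apply le_INR in Hk. pose proof (pos_INR k). split; [apply Rdiv_le_0_compat; lra |].
  apply (Rmult_le_reg_r (INR N)); auto. unfold Rdiv; rewrite Rmult_assoc, Rinv_l; lra.
Qed.

Lemma samp_0 f N : samp f N 0 = f 0.
Proof. unfold samp. simpl. unfold Rdiv. rewrite Rmult_0_l. reflexivity. Qed.

Lemma samp_N f N : (0 < N)%nat -> samp f N N = f 1.
Proof. intros H. unfold samp. f_equal. field. apply not_0_INR. lia. Qed.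

(* Uniform continuity: fine samplings exist. *)
Lemma mesh (f : R -> pt) : pc f -> forall d, 0 < d ->
  exists N0, forall N, (N0 <= N)%nat -> (0 < N)%nat -> fine f N d.
Proof.
  intros [H1 H2] d Hd.
  destruct (Heine_cor2 (f := fun s => fst (f s)) (a := 0) (b := 1) (fun x _ => H1 x)
              (mkposreal (d / 2) ltac:(lra))) as [d1 Hd1].
  destruct (Heine_cor2 (f := fun s => snd (f s)) (a := 0) (b := 1) (fun x _ => H2 x)
              (mkposreal (d / 2) ltac:(lra))) as [d2 Hd2].
  simpl in *. pose proof (cond_pos d1); pose proof (cond_pos d2).
  destruct (archimed_cor1 (Rmin d1 d2)) as [N0 [HN0 HN0p]]; [apply Rmin_pos; lra |].
  exists N0. intros N HN HNp. split; [auto |]. intros k Hk.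
  assert (HNr : 0 < INR N) by (apply lt_0_INR; lia).
  assert (Hstep : Rabs (INR (S k) / INR N - INR k / INR N) < Rmin d1 d2).
  { rewrite S_INR. replace ((INR k + 1) / INR N - INR k / INR N) with (/ INR N) by (field; lra).
    rewrite Rabs_pos_eq by (left; apply Rinv_0_lt_compat; lra).
    apply (Rle_lt_trans _ (/ INR N0)); auto.
    apply Rinv_le_contravar; [apply lt_0_INR; lia | apply le_INR; lia]. }
  pose proof (Rmin_l d1 d2); pose proof (Rmin_r d1 d2).
  pose proof (samp_range N (S k) HNp ltac:(lia)); pose proof (samp_range N k HNp ltac:(lia)).
  pose proof (Hd1 (INR (S k) / INR N) (INR k / INR N) ltac:(auto) ltac:(auto) ltac:(lra)).
  pose proof (Hd2 (INR (S k) / INR N) (INR k / INR N) ltac:(auto) ltac:(auto) ltac:(lra)).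
  unfold samp. eapply Rle_lt_trans; [apply dst_le_abs | lra].
Qed.

Lemma cont_by_bound (h F : R -> R) x :
  (forall y, Rabs (h y - h x) <= F y) -> continuity_pt F x -> F x = 0 -> continuity_pt h x.
Proof.
  intros Hb HF H0. unfold continuity_pt, continue_in, limit1_in, limit_in in *. simpl in *.
  intros eps He. destruct (HF eps He) as [alp [Ha Hal]]. exists alp; split; auto.
  intros y Hy. specialize (Hal y Hy). unfold Rdist in *. rewrite H0, Rminus_0_r in Hal.
  eapply Rle_lt_trans; [apply Hb |]. eapply Rle_lt_trans; [apply Rle_abs | auto].
Qed.

(* Compactness: two disjoint paths on [0,1] are at positive distance. *)
Lemma curve_dist (f g : R -> pt) : pc f -> pc g ->
  (forall s t, 0 <= s <= 1 -> 0 <= t <= 1 -> f s <> g t) ->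
  exists d, 0 < d /\ forall s t, 0 <= s <= 1 -> 0 <= t <= 1 -> d <= dst (f s) (g t).
Proof.
  intros Hf Hg Hne.
  set (Pm := fun s t => 0 <= t <= 1 /\ forall t', 0 <= t' <= 1 -> dst (f s) (g t) <= dst (f s) (g t')).
  assert (Ex : forall s, exists t, Pm s t).
  { intros s. destruct (continuity_ab_min (fun t => dst (f s) (g t)) 0 1 ltac:(lra)) as [m [Hm1 Hm2]].
    - intros c _. apply C1_dst_r; auto.
    - exists m. split; auto. }
  set (tm := fun s => epsilon (inhabits 0) (Pm s)).
  assert (Htm : forall s, Pm s (tm s)) by (intros s; exact (epsilon_spec (inhabits 0) (Pm s) (Ex s))).
  (* h s = distance from f s to the path g, which is 1-Lipschitz in f s *)
  set (h := fun s => dst (f s) (g (tm s))).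
  assert (Hh : forall x, continuity_pt h x).
  { intros x. apply (cont_by_bound h (fun y => dst (f x) (f y))).
    - intros y. unfold h. apply Rabs_le. destruct (Htm x) as [Hx1 Hx2]. destruct (Htm y) as [Hy1 Hy2].
      pose proof (Hx2 (tm y) Hy1). pose proof (dst_tri (f x) (f y) (g (tm y))).
      pose proof (Hy2 (tm x) Hx1). pose proof (dst_tri (f y) (f x) (g (tm x))).
      rewrite (dst_sym (f y) (f x)) in *. split; lra.
    - apply C1_dst_r; auto.
    - unfold dst, psub, nrm. cbn [fst snd]. rewrite !Rminus_eq_0.
      replace (0 ^ 2 + 0 ^ 2) with 0 by ring. apply sqrt_0. }
  destruct (continuity_ab_min h 0 1 ltac:(lra) (fun c _ => Hh c)) as [m [Hm1 Hm2]].
  exists (h m). split.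
  - unfold h. destruct (Htm m) as [Ht _]. destruct (dst_ge0 (f m) (g (tm m))) as [| E]; auto.
    exfalso. apply (Hne m (tm m) Hm2 Ht). apply dst_eq0. auto.
  - intros s t Hs Ht. eapply Rle_trans; [apply (Hm1 s Hs) |]. unfold h. apply Htm; auto.
Qed.

Lemma valid_of_fine f N z d : fine f N d -> avoids f z d ->
  forall k, (k < N)%nat -> valid z (samp f N k) (samp f N (S k)).
Proof.
  intros [HN Hm] Hd k Hk. unfold valid. specialize (Hm k Hk).
  pose proof (Hd (INR k / INR N) (samp_range N k HN ltac:(lia))). unfold samp in *. lra.
Qed.

Lemma loop_polygon f g N w : loop f g -> (0 < N)%nat ->
  samp f N N = samp g N O /\ cat (samp f N) (samp g N) N (N + N) = cat (samp f N) (samp g N) N O /\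
  ws (cat (samp f N) (samp g N) N) (N + N) w = wloop f g N w.
Proof.
  intros [H1 H2] HN. assert (J : samp f N N = samp g N O) by (rewrite samp_N, samp_0; auto).
  split; [auto | split].
  - rewrite cat_hi, cat_lo by (auto; lia). rewrite samp_N, samp_0 by auto. congruence.
  - apply ws_cat; auto.
Qed.

Lemma wloop_homotopy f g N d (W : R -> pt) : loop f g -> fine f N d -> fine g N d -> pc W ->
  (forall s, 0 <= s <= 1 -> avoids f (W s) d /\ avoids g (W s) d) ->
  wloop f g N (W 0) = wloop f g N (W 1).
Proof.
  intros Hl Hf Hg HW Hav. pose proof (proj1 Hf) as HN.
  destruct (loop_polygon f g N (W 0) Hl HN) as [J [C E0]].
  destruct (loop_polygon f g N (W 1) Hl HN) as [_ [_ E1]].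
  rewrite <- E0, <- E1. apply ws_path; auto; [lia |].
  intros s Hs. destruct (Hav s Hs). apply step_cat; auto; eapply valid_of_fine; eauto.
Qed.

Lemma wloop_ray f g N d w v : loop f g -> fine f N d -> fine g N d -> nrm v = 1 ->
  (forall m, 0 <= m -> avoids f (ray w v m) d /\ avoids g (ray w v m) d) ->
  wloop f g N w = 0.
Proof.
  intros Hl Hf Hg Hv Hav. pose proof (proj1 Hf) as HN.
  set (u := (- fst v, snd v)).
  assert (Hu : nrm u = 1) by (rewrite <- Hv; unfold u, nrm; cbn [fst snd]; f_equal; ring).
  assert (Eray : forall m, ray w v m = (fst w - m * fst u, snd w + m * snd u))
    by (intros m; unfold ray, u; cbn [fst snd]; f_equal; ring).
  assert (Ew : ray w v 0 = w) by (unfold ray; destruct w; cbn [fst snd]; f_equal; ring).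
  destruct (loop_polygon f g N w Hl HN) as [J [C E]]. rewrite <- E.
  destruct (Hav 0 ltac:(lra)) as [Hf0 Hg0]. rewrite Ew in Hf0, Hg0.
  apply ws_cut with (u := u); auto; [apply step_cat; auto; eapply valid_of_fine; eauto |].
  assert (Hno : forall p, fine p N d -> (forall m, 0 <= m -> avoids p (ray w v m) d) ->
            forall k, (k < N)%nat -> ~ crosses_cut u (psub (samp p N k) w) (psub (samp p N (S k)) w)).
  { intros p [_ Hp] Hpa k Hk. apply no_cross_of_dist with (d := d); auto.
    intros m Hm. rewrite <- Eray. apply Hpa; auto. apply samp_range; lia. }
  apply (step_cat (fun a b => ~ crosses_cut u (psub a w) (psub b w))); auto;
    apply Hno; auto; intros m Hm; apply Hav; auto.
Qed.

Lemma samp_rev f N k : (0 < N)%nat -> (k <= N)%nat -> samp (rev f) N k = samp f N (N - k).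
Proof.
  intros HN Hk. unfold samp, rev. f_equal. rewrite minus_INR by lia. field. apply not_0_INR. lia.
Qed.

Lemma fine_rev f N d : fine f N d -> fine (rev f) N d.
Proof.
  intros [HN Hm]. split; [auto |]. intros k Hk. rewrite !samp_rev by lia.
  rewrite dst_sym. replace (N - k)%nat with (S (N - S k)) by lia. apply Hm. lia.
Qed.

Lemma wnd_rev f N d w : fine f N d -> avoids f w d -> wnd (rev f) N w = - wnd f N w.
Proof.
  intros Hf Ha. pose proof (proj1 Hf) as HN. unfold wnd at 2.
  rewrite <- (ws_rev (samp f N) N w (valid_of_fine f N w d Hf Ha)).
  unfold wnd, ws. apply sumw_ext. intros k Hk. rewrite !samp_rev by lia. reflexivity.
Qed.

Definition arcf (al be : R) (s : R) : pt := (cos (al + s * be), sin (al + s * be)).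

Lemma arcf_pc al be : pc (arcf al be).
Proof. unfold arcf; split; cbn [fst snd]; [apply C1_cos | apply C1_sin]; apply C1_affine. Qed.

Lemma arcf_nrm al be s : nrm (arcf al be s) = 1.
Proof. apply nrm_unit. Qed.

Lemma wnd_arc al be N : (0 < N)%nat -> Rabs (be / INR N) < PI -> wnd (arcf al be) N (0, 0) = be.
Proof.
  intros HN Hb. assert (HNr : 0 < INR N) by (apply lt_0_INR; lia).
  unfold wnd, ws. transitivity (sumw (fun _ => be / INR N) N).
  - apply sumw_ext. intros k Hk. unfold stepang, samp, arcf, psub, rat. cbn [fst snd].
    rewrite !Rminus_0_r.
    set (t1 := al + INR k / INR N * be). set (t2 := al + INR (S k) / INR N * be).
    assert (E : t2 - t1 = be / INR N) by (unfold t1, t2; rewrite S_INR; field; lra).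
    replace (cos t2 * cos t1 + sin t2 * sin t1, sin t2 * cos t1 - cos t2 * sin t1)
      with (cos (t2 - t1), sin (t2 - t1)) by (rewrite cos_minus, sin_minus; f_equal; ring).
    rewrite E. apply ang_unit. apply Rabs_def2 in Hb. lra.
  - assert (Hc : forall n, sumw (fun _ => be / INR N) n = INR n * (be / INR N))
      by (induction n; [simpl; ring | rewrite S_INR; simpl; rewrite IHn; ring]).
    rewrite Hc. field. lra.
Qed.

Definition in_disc (f : R -> pt) : Prop := forall s, 0 <= s <= 1 -> nrm (f s) <= 1.

Definition radial_dir (w : pt) : pt := (fst w / nrm w, snd w / nrm w).

Lemma radial_dir_nrm w : 0 < nrm w -> nrm (radial_dir w) = 1.
Proof.
  intros Hw. unfold radial_dir.
  replace (fst w / nrm w, snd w / nrm w) with (/ nrm w * fst w, / nrm w * snd w)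
    by (f_equal; unfold Rdiv; ring).
  rewrite nrm_scale by (left; apply Rinv_0_lt_compat; lra). field. lra.
Qed.

Lemma ray_radial w m : 0 < nrm w ->
  ray w (radial_dir w) m = ((1 + m / nrm w) * fst w, (1 + m / nrm w) * snd w).
Proof. intros Hw. unfold ray, radial_dir; cbn [fst snd]. f_equal; field; lra. Qed.

Lemma wloop_outside f g N d z : loop f g -> fine f N d -> fine g N d -> in_disc f -> in_disc g ->
  0 < d -> d <= nrm z - 1 -> wloop f g N z = 0.
Proof.
  intros Hl Hf Hg Df Dg Hd Hz. assert (Hz0 : 0 < nrm z) by lra.
  apply (wloop_ray f g N d z (radial_dir z)); auto; [apply radial_dir_nrm; auto |].
  assert (Hfar : forall p, in_disc p -> forall m, 0 <= m -> avoids p (ray z (radial_dir z) m) d).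
  { intros p Dp m Hm s Hs. rewrite ray_radial by auto.
    assert (0 <= m / nrm z) by (apply Rdiv_le_0_compat; lra).
    pose proof (nrm_le_dst ((1 + m / nrm z) * fst z, (1 + m / nrm z) * snd z) (p s)) as T.
    rewrite nrm_scale in T by lra. rewrite dst_sym in T. pose proof (Dp s Hs). nra. }
  intros m Hm. split; apply Hfar; auto.
Qed.

Lemma radial_exit (v : pt) r x y mu : 0 < r -> r * r = x * x + y * y -> nrm v <= 1 -> 1 <= mu ->
  dst v (x / r, y / r) <= dst v (mu * (x / r), mu * (y / r)).
Proof.
  intros Hr Hq Hv Hmu.
  assert (Hu : (x / r) ^ 2 + (y / r) ^ 2 = 1).
  { replace ((x / r) ^ 2 + (y / r) ^ 2) with ((x * x + y * y) / (r * r)) by (field; lra).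
    rewrite <- Hq. field. lra. }
  set (ux := x / r) in *. set (uy := y / r) in *.
  pose proof (nrm_sq v) as Hs. unfold sq in Hs. pose proof (nrm_ge0 v).
  assert (Hvv : fst v ^ 2 + snd v ^ 2 <= 1) by nra.
  assert (Hdot : fst v * ux + snd v * uy <= 1).
  { pose proof (pow2_ge_0 (fst v - ux)); pose proof (pow2_ge_0 (snd v - uy)). nra. }
  assert (dst v (ux, uy) * dst v (ux, uy) <= dst v (mu * ux, mu * uy) * dst v (mu * ux, mu * uy))
    by (rewrite !dst_sq; cbn [fst snd]; nra).
  pose proof (dst_ge0 v (ux, uy)). pose proof (dst_ge0 v (mu * ux, mu * uy)). nra.
Qed.

Lemma ray_bound x0 w v e d0 lam : nrm x0 = 1 -> 0 < nrm w -> nrm w <= 1 -> dst w x0 <= e ->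
  nrm v <= 1 -> d0 <= dst v x0 -> 1 <= lam -> d0 - 2 * e <= dst v (lam * fst w, lam * snd w).
Proof.
  intros Hx0 Hw Hw1 Hwe Hv Hd Hl.
  set (r := nrm w) in *.
  pose proof (nrm_le_dst x0 w) as T1. rewrite (dst_sym x0 w) in T1. fold r in T1.
  destruct (Rle_dec (lam * r) 1).
  - assert (dst (lam * fst w, lam * snd w) w = (lam - 1) * r).
    { unfold r. rewrite <- (dst_scale2 lam 1 w) by lra. f_equal. destruct w; cbn [fst snd]; f_equal; ring. }
    pose proof (dst_tri (lam * fst w, lam * snd w) w x0).
    pose proof (dst_tri v (lam * fst w, lam * snd w) x0).
    assert ((lam - 1) * r <= 1 - r) by nra. lra.
  - set (p1 := (fst w / r, snd w / r)).
    assert (Hp1 : p1 = ((/ r) * fst w, (/ r) * snd w)) by (unfold p1; f_equal; unfold Rdiv; ring).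
    assert (dst p1 w = 1 - r).
    { assert (1 <= / r) by (apply (Rmult_le_reg_r r); auto; rewrite Rinv_l; lra).
      rewrite Hp1. transitivity ((/ r - 1) * nrm w).
      - rewrite <- (dst_scale2 (/ r) 1 w) by lra. f_equal. destruct w; cbn [fst snd]; f_equal; ring.
      - unfold r. field. unfold r in Hw. lra. }
    assert (Hlw : (lam * fst w, lam * snd w) = ((lam * r) * (fst w / r), (lam * r) * (snd w / r)))
      by (f_equal; field; lra).
    pose proof (radial_exit v r (fst w) (snd w) (lam * r) Hw
                  ltac:(unfold r; rewrite nrm_sq; unfold sq; ring) Hv ltac:(lra)) as Hre.
    rewrite <- Hlw in Hre. fold p1 in Hre.
    pose proof (dst_tri p1 w x0). pose proof (dst_tri v p1 x0). lra.
Qed.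

(* A loop in the disc staying away from a boundary point x0 does not wind around
   points of the disc close to x0: the outward ray escapes near x0. *)
Lemma wloop_near_boundary f g N d d0 x0 w : loop f g -> fine f N d -> fine g N d ->
  in_disc f -> in_disc g -> nrm x0 = 1 -> avoids f x0 d0 -> avoids g x0 d0 ->
  0 < nrm w <= 1 -> dst w x0 <= d0 / 6 -> d <= d0 / 2 -> wloop f g N w = 0.
Proof.
  intros Hl Hf Hg Df Dg Hx0 Af Ag Hw Hwx Hd.
  apply (wloop_ray f g N d w (radial_dir w)); auto; [apply radial_dir_nrm; lra |].
  assert (Hesc : forall p, in_disc p -> avoids p x0 d0 -> forall m, 0 <= m ->
            avoids p (ray w (radial_dir w) m) d).
  { intros p Dp Ap m Hm s Hs. rewrite ray_radial by lra.
    assert (0 <= m / nrm w) by (apply Rdiv_le_0_compat; lra).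
    pose proof (ray_bound x0 w (p s) (d0 / 6) d0 (1 + m / nrm w) Hx0 ltac:(lra) ltac:(lra) Hwx
                  (Dp s Hs) (Ap s Hs) ltac:(lra)).
    pose proof (dst_ge0 w x0). lra. }
  intros m Hm. split; apply Hesc; auto.
Qed.

(* A loop made of two arcs of the unit circle winds around every interior point w by
   its total angle: deform w to the origin along the segment [0, w]. *)
Lemma wloop_circle al1 be1 al2 be2 N d w : loop (arcf al1 be1) (arcf al2 be2) ->
  fine (arcf al1 be1) N d -> fine (arcf al2 be2) N d ->
  nrm w < 1 -> d <= 1 - nrm w -> Rabs (be1 / INR N) < PI -> Rabs (be2 / INR N) < PI ->
  wloop (arcf al1 be1) (arcf al2 be2) N w = be1 + be2.
Proof.
  intros Hl Hf1 Hf2 Hw Hd Hb1 Hb2. pose proof (proj1 Hf1) as HN.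
  set (W := fun s => (s * fst w, s * snd w)).
  assert (HW : pc W) by (unfold W; split; cbn [fst snd]; apply C1_mult; try apply C1_id; apply C1_const).
  assert (Hav : forall al' be s, 0 <= s <= 1 -> avoids (arcf al' be) (W s) d).
  { intros al' be s Hs t Ht. pose proof (nrm_le_dst (arcf al' be t) (W s)) as T.
    rewrite arcf_nrm in T. unfold W in *. rewrite nrm_scale in T by lra.
    pose proof (nrm_ge0 w). nra. }
  replace w with (W 1) by (unfold W; destruct w; cbn [fst snd]; f_equal; ring).
  rewrite <- (wloop_homotopy _ _ N d W); try (intros s Hs; split; apply Hav); auto.
  replace (W 0) with (0, 0) by (unfold W; f_equal; ring).
  unfold wloop. rewrite !wnd_arc; auto.
Qed.

(** The cross-cut lemma.  For angles ta, tb in (-PI, PI), the arc of the circle minus P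
    between them is chord_arc ta tb; the complementary arc, through P, is compl_arc ta tb,
    and together they turn once around the circle, by turn ta tb = +-2 PI. *)

Definition turn (ta tb : R) : R := if Rlt_dec ta tb then 2 * PI else - (2 * PI).
Definition chord_arc (ta tb : R) : R -> pt := arcf ta (tb - ta).
Definition compl_arc (ta tb : R) : R -> pt := arcf tb (ta + turn ta tb - tb).

Lemma cos_sin_turn ta tb t : (cos (t + turn ta tb), sin (t + turn ta tb)) = (cos t, sin t).
Proof.
  unfold turn. destruct Rlt_dec.
  - rewrite cos_plus, sin_plus, cos_2PI, sin_2PI. f_equal; ring.
  - rewrite cos_plus, sin_plus, cos_neg, sin_neg, cos_2PI, sin_2PI. f_equal; ring.
Qed.

Lemma chord_arc_0 ta tb : chord_arc ta tb 0 = (cos ta, sin ta).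
Proof. unfold chord_arc, arcf. f_equal; f_equal; ring. Qed.
Lemma chord_arc_1 ta tb : chord_arc ta tb 1 = (cos tb, sin tb).
Proof. unfold chord_arc, arcf. f_equal; f_equal; ring. Qed.
Lemma compl_arc_0 ta tb : compl_arc ta tb 0 = (cos tb, sin tb).
Proof. unfold compl_arc, arcf. f_equal; f_equal; ring. Qed.
Lemma compl_arc_1 ta tb : compl_arc ta tb 1 = (cos ta, sin ta).
Proof.
  unfold compl_arc, arcf. rewrite <- (cos_sin_turn ta tb ta). f_equal; f_equal; ring.
Qed.

Lemma compl_arc_misses ta tb sig : -PI < ta < PI -> -PI < tb < PI -> Rmin ta tb < sig < Rmax ta tb ->
  forall t, 0 <= t <= 1 -> compl_arc ta tb t <> (cos sig, sin sig).
Proof.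
  intros Hta Htb Hs t Ht E. unfold compl_arc, arcf in E. injection E as E1 E2.
  pose proof PI_RGT_0. pose proof (sin2_cos2 sig) as Hsc. unfold Rsqr in Hsc.
  set (be := ta + turn ta tb - tb) in *.
  assert (Hc : cos (tb + t * be - sig) = 1) by (rewrite cos_minus, E1, E2; lra).
  assert (Hrange : 0 < tb + t * be - sig < 2 * PI \/ -2 * PI < tb + t * be - sig < 0).
  { unfold be, turn in *. unfold Rmin, Rmax in Hs.
    destruct (Rlt_dec ta tb); destruct (Rle_dec ta tb); try lra.
    - left. assert (0 <= t * (ta + 2 * PI - tb) <= ta + 2 * PI - tb) by (split; nra). lra.
    - right. assert (ta + - (2 * PI) - tb <= t * (ta + - (2 * PI) - tb) <= 0) by (split; nra). lra. }
  assert (tb + t * be - sig = 0) by (apply cos1_0; [auto | lra]). lra.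
Qed.

Lemma small_angle_step x N : Rabs x <= 2 * PI -> 3 <= INR N -> Rabs (x / INR N) < PI.
Proof.
  intros Hx HN. pose proof PI_RGT_0. rewrite Rabs_div by lra. rewrite (Rabs_pos_eq (INR N)) by lra.
  apply (Rmult_lt_reg_r (INR N)); [lra |]. unfold Rdiv. rewrite Rmult_assoc, Rinv_l by lra. nra.
Qed.

Lemma avoids_rev f z d : avoids f z d -> avoids (rev f) z d.
Proof. intros H s Hs. apply H. lra. Qed.

(* A path V from a point w of the
   disc near the boundary point x0 to a point outside the disc, avoiding the cross-cut G
   and the arc A between its ends, is impossible: the loop G + (reversed A) would wind
   around w as around V 1, i.e. not at all; the loop G + (complementary arc) does not
   wind around w either, since x0 is far from it; but the difference of the two loops is
   the whole circle, which winds by +-2 PI. *)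
Lemma crosscut_winding (G V : R -> pt) ta tb x0 d0 d N :
  -PI < ta < PI -> -PI < tb < PI ->
  G 0 = (cos ta, sin ta) -> G 1 = (cos tb, sin tb) -> in_disc G ->
  nrm x0 = 1 -> avoids G x0 d0 -> avoids (compl_arc ta tb) x0 d0 ->
  pc V -> 0 < nrm (V 0) -> dst (V 0) x0 <= d0 / 6 ->
  (forall s, 0 <= s <= 1 -> avoids G (V s) d /\ avoids (chord_arc ta tb) (V s) d) ->
  0 < d -> d <= d0 / 2 -> d <= 1 - nrm (V 0) -> d <= nrm (V 1) - 1 ->
  fine G N d -> fine (chord_arc ta tb) N d -> fine (compl_arc ta tb) N d -> 3 <= INR N -> False.
Proof.
  intros Hta Htb G0 G1 DG Hx0 AG0 AB0 HV HV0 HVx HVav Hd Hd0 Hdw Hd1 FG FA FB HN.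
  set (A := chord_arc ta tb) in *. set (B := compl_arc ta tb) in *. set (w := V 0) in *.
  assert (DA : in_disc A) by (intros s _; unfold A, chord_arc; rewrite arcf_nrm; lra).
  assert (DB : in_disc B) by (intros s _; unfold B, compl_arc; rewrite arcf_nrm; lra).
  assert (LC : loop G (rev A)).
  { unfold rev; split; rewrite ?Rminus_0_r, ?Rminus_diag_eq by reflexivity;
      unfold A; [rewrite chord_arc_1 | rewrite chord_arc_0]; auto. }
  assert (LC' : loop G B) by (unfold B; split; [rewrite compl_arc_0 | rewrite compl_arc_1]; auto).
  assert (LO : loop A B)
    by (unfold A, B; split; [rewrite compl_arc_0, chord_arc_1 | rewrite compl_arc_1, chord_arc_0]; auto).
  (* the loop G + reversed A: no winding around V 1, hence none around w *)
  assert (E1 : wloop G (rev A) N w = 0).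
  { unfold w. rewrite (wloop_homotopy G (rev A) N d V); auto.
    - apply (wloop_outside G (rev A) N d); auto; [apply fine_rev; auto |].
      intros s Hs. unfold rev. apply DA. lra.
    - apply fine_rev; auto.
    - intros s Hs. destruct (HVav s Hs). split; [| apply avoids_rev]; auto. }
  assert (E2 : wloop G B N w = 0).
  { apply (wloop_near_boundary G B N d d0 x0 w); auto. pose proof (nrm_ge0 w). lra. }
  assert (E3 : wloop A B N w = turn ta tb).
  { unfold A, B, chord_arc, compl_arc in *.
    enough (E : wloop (arcf ta (tb - ta)) (arcf tb (ta + turn ta tb - tb)) N w
                = tb - ta + (ta + turn ta tb - tb)) by (rewrite E; ring).
    apply (wloop_circle ta _ tb _ N d); auto; [lra | apply small_angle_step; auto ..];
      unfold turn; try destruct Rlt_dec; unfold Rabs; destruct Rcase_abs; lra. }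
  assert (E4 : wnd (rev A) N w = - wnd A N w).
  { apply (wnd_rev A N d); auto. intros s _. pose proof (nrm_le_dst (A s) w) as T.
    unfold A, chord_arc in T |- *. rewrite arcf_nrm in T. lra. }
  unfold wloop in *. assert (turn ta tb = 0) by lra.
  unfold turn in *. destruct Rlt_dec; pose proof PI_RGT_0; lra.
Qed.

Lemma crosscut (G : R -> pt) ta tb sig :
  -PI < ta < PI -> -PI < tb < PI -> Rmin ta tb < sig < Rmax ta tb ->
  pc G -> G 0 = (cos ta, sin ta) -> G 1 = (cos tb, sin tb) -> in_disc G ->
  (forall s, 0 <= s <= 1 -> G s <> (cos sig, sin sig)) ->
  exists del, 0 < del /\ forall V : R -> pt, pc V -> nrm (V 0) < 1 ->
    dst (V 0) (cos sig, sin sig) < del -> 1 < nrm (V 1) ->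
    (forall s t, 0 <= s <= 1 -> 0 <= t <= 1 -> V s <> G t /\ V s <> chord_arc ta tb t) -> False.
Proof.
  intros Hta Htb Hsig HG G0 G1 DG Hx.
  set (x0 := (cos sig, sin sig)).
  destruct (curve_dist G (fun _ => x0) HG (pc_const x0)) as [dG0 [HdG0 AG0]];
    [intros s t Hs _; apply Hx; auto |].
  destruct (curve_dist (compl_arc ta tb) (fun _ => x0) (arcf_pc _ _) (pc_const x0)) as [dB0 [HdB0 AB0]];
    [intros s t Hs _; apply (compl_arc_misses ta tb sig); auto |].
  assert (Hd0 : exists d0, 0 < d0 <= 1 /\ d0 <= dG0 /\ d0 <= dB0)
    by (exists (Rmin (Rmin dG0 dB0) 1); unfold Rmin; repeat destruct Rle_dec; lra).
  destruct Hd0 as [d0 [Hd0 [Hd0G Hd0B]]].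
  exists (d0 / 6). split; [lra |]. intros V HV HV0 HVx HV1 Hmiss.
  assert (HVn : 0 < nrm (V 0)).
  { assert (Hx1 : nrm x0 = 1) by apply nrm_unit.
    pose proof (nrm_le_dst x0 (V 0)) as T. rewrite dst_sym in T. lra. }
  destruct (curve_dist V G HV HG) as [dG [HdG HVG]]; [intros s t Hs Ht; apply Hmiss; auto |].
  destruct (curve_dist V (chord_arc ta tb) HV (arcf_pc _ _)) as [dA [HdA HVA]];
    [intros s t Hs Ht; apply Hmiss; auto |].
  assert (Hd : exists d, 0 < d /\ d <= dG /\ d <= dA /\ d <= d0 / 2 /\
                        d <= 1 - nrm (V 0) /\ d <= nrm (V 1) - 1).
  { exists (Rmin (Rmin dG dA) (Rmin (d0 / 2) (Rmin (1 - nrm (V 0)) (nrm (V 1) - 1)))).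
    unfold Rmin; repeat destruct Rle_dec; lra. }
  destruct Hd as [d [Hd [HdG' [HdA' [Hd0' [Hdw Hd1]]]]]].
  destruct (mesh G HG d Hd) as [NG FG].
  destruct (mesh _ (arcf_pc ta (tb - ta)) d Hd) as [NA FA].
  destruct (mesh _ (arcf_pc tb (ta + turn ta tb - tb)) d Hd) as [NB FB].
  set (N := (NG + NA + NB + 3)%nat).
  assert (HN : 3 <= INR N) by (replace 3 with (INR 3) by (simpl; ring); apply le_INR; unfold N; lia).
  apply (crosscut_winding G V ta tb x0 d0 d N); auto; try lra.
  - unfold x0. apply nrm_unit.
  - intros s Hs. pose proof (AG0 s 0 Hs ltac:(lra)). lra.
  - intros s Hs. pose proof (AB0 s 0 Hs ltac:(lra)). lra.
  - intros s Hs. split; intros t Ht; rewrite dst_sym;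
      [pose proof (HVG s t Hs Ht) | pose proof (HVA s t Hs Ht)]; lra.
  - apply FG; unfold N; lia.
  - apply FA; unfold N; lia.
  - apply FB; unfold N; lia.
Qed.

(** The map u.  In the annulus 1/2 < |x| < 1, u1 x = min (kk |x| * |PI - th|) 1 where th
    is the polar angle of x in [0, 2 PI]; it is small near the negative axis. *)

Definition kk (r : R) : R := (1 - 2 * (1 - r)) / (2 * PI * (1 - r)).

Lemma kk_pos r : 1 / 2 < r < 1 -> 0 < kk r.
Proof. intros H. unfold kk. pose proof PI_RGT_0. apply Rdiv_lt_0_compat; nra. Qed.

Lemma u1_in x : nrm x <= 1 / 2 -> u1 x = 1 - 2 * nrm x.
Proof. intros H. unfold u1, u. cbv zeta. destruct (Rle_dec (nrm x) (1 / 2)); [reflexivity | lra]. Qed.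

Lemma u1_bd x : nrm x = 1 -> u1 x = 1.
Proof.
  intros H. unfold u1, u. cbv zeta. destruct (Rle_dec (nrm x) (1 / 2)); [lra |].
  destruct (Rle_dec (nrm x) 1); [| lra]. destruct (Req_EM_T (nrm x) 1); [reflexivity | lra].
Qed.

Lemma u1_out x : 1 < nrm x -> u1 x = 0.
Proof.
  intros H. unfold u1, u. cbv zeta. destruct (Rle_dec (nrm x) (1 / 2)); [lra |].
  destruct (Rle_dec (nrm x) 1); [lra | reflexivity].
Qed.

(* The quantity |PI - th| does not depend on the choice of polar angle th in [0, 2 PI]. *)
Lemma same_angle a b : 0 <= a <= 2 * PI -> 0 <= b <= 2 * PI -> cos a = cos b -> sin a = sin b ->
  Rabs (PI - a) = Rabs (PI - b).
Proof.
  intros Ha Hb Hc Hs. pose proof PI_RGT_0.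
  assert (Hab : cos (a - b) = 1).
  { rewrite cos_minus, Hc, Hs. pose proof (sin2_cos2 b). unfold Rsqr in *. lra. }
  destruct (cos1_3 _ Hab ltac:(lra)) as [E | [E | E]].
  - replace a with 0 by lra. replace b with (2 * PI) by lra.
    rewrite (Rabs_pos_eq (PI - 0)), (Rabs_left (PI - 2 * PI)); lra.
  - replace a with b by lra. reflexivity.
  - replace b with 0 by lra. replace a with (2 * PI) by lra.
    rewrite (Rabs_pos_eq (PI - 0)), (Rabs_left (PI - 2 * PI)); lra.
Qed.

Lemma u1_ann x th : 1 / 2 < nrm x < 1 -> 0 <= th <= 2 * PI -> x = (nrm x * cos th, nrm x * sin th) ->
  u1 x = Rmin (kk (nrm x) * Rabs (PI - th)) 1.
Proof.
  intros Hr Hth Hx. unfold u1, u. cbv zeta. destruct (Rle_dec (nrm x) (1 / 2)); [lra |].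
  destruct (Rle_dec (nrm x) 1); [| lra]. destruct (Req_EM_T (nrm x) 1); [lra |]. cbn [fst].
  set (P := fun v => exists th0, 0 <= th0 <= 2 * PI /\
            x = ((1 - (1 - nrm x)) * cos th0, (1 - (1 - nrm x)) * sin th0) /\
            v = Rmin ((1 - 2 * (1 - nrm x)) / (2 * PI * (1 - nrm x)) * Rabs (PI - th0)) 1).
  assert (Ex : exists v, P v).
  { eexists. exists th. split; [auto | split; [| reflexivity]].
    replace (1 - (1 - nrm x)) with (nrm x) by ring. exact Hx. }
  destruct (epsilon_spec (inhabits 0) P Ex) as [th0 [Hth0 [Hx0 Hv]]].
  rewrite Hv. fold (kk (nrm x)).
  replace (1 - (1 - nrm x)) with (nrm x) in Hx0 by ring.
  assert (Hxx : (nrm x * cos th0, nrm x * sin th0) = (nrm x * cos th, nrm x * sin th))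
    by (rewrite <- Hx0; exact Hx).
  injection Hxx as E1 E2.
  rewrite (same_angle th0 th); auto; apply (Rmult_eq_reg_l (nrm x)); lra.
Qed.

Lemma u1_nonneg x : nrm x < 1 -> 0 <= u1 x.
Proof.
  intros H. destruct (Rle_dec (nrm x) (1 / 2)); [rewrite u1_in; lra |].
  destruct (polar x ltac:(lra)) as [th [Hth Hx]].
  rewrite (u1_ann x th) by (auto; lra). pose proof (kk_pos (nrm x) ltac:(lra)).
  pose proof (Rabs_pos (PI - th)). apply Rmin_glb; nra.
Qed.

Lemma u1_rotate q th0 s : 0 < nrm q < 1 -> 0 <= th0 <= 2 * PI ->
  q = (nrm q * cos th0, nrm q * sin th0) -> 0 <= s <= 1 ->
  u1 (nrm q * cos (th0 + s * (PI - th0)), nrm q * sin (th0 + s * (PI - th0))) <= u1 q.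
Proof.
  intros Hq Hth0 Hpol Hs. set (rho := nrm q) in *. set (th := th0 + s * (PI - th0)).
  assert (Hn : nrm (rho * cos th, rho * sin th) = rho) by (apply nrm_polar; lra).
  destruct (Rle_dec rho (1 / 2)).
  - rewrite u1_in, Hn, (u1_in q); fold rho; lra.
  - assert (Hth : 0 <= th <= 2 * PI) by (unfold th; nra).
    rewrite (u1_ann _ th) by (rewrite ?Hn; auto; lra).
    rewrite (u1_ann q th0) by (fold rho; auto; lra). fold rho. rewrite Hn.
    replace (PI - th) with ((1 - s) * (PI - th0)) by (unfold th; ring).
    rewrite Rabs_mult, (Rabs_pos_eq (1 - s)) by lra.
    pose proof (kk_pos rho ltac:(lra)). pose proof (Rabs_pos (PI - th0)).
    assert (kk rho * ((1 - s) * Rabs (PI - th0)) <= kk rho * Rabs (PI - th0)).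
    { apply Rmult_le_compat_l; nra. }
    unfold Rmin; repeat destruct Rle_dec; lra.
Qed.

Lemma u1_neg_axis q x : 0 < nrm q < 1 -> nrm q <= x -> x <> 1 -> u1 (- x, 0) <= u1 q.
Proof.
  intros Hq Hx Hx1. pose proof (u1_nonneg q ltac:(lra)).
  assert (Hn : nrm (- x, 0) = x) by (rewrite nrm_x0, Rabs_left1; lra).
  destruct (Rle_dec x (1 / 2)).
  - rewrite (u1_in (- x, 0)), Hn, (u1_in q) by (rewrite ?Hn; lra). lra.
  - destruct (Rlt_dec x 1).
    + rewrite (u1_ann (- x, 0) PI); rewrite ?Hn; try lra.
      * rewrite Rminus_diag_eq, Rabs_R0, Rmult_0_r by reflexivity. unfold Rmin; destruct Rle_dec; lra.
      * pose proof PI_RGT_0. lra.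
      * rewrite cos_PI, sin_PI. f_equal; ring.
    + rewrite u1_out; lra.
Qed.

(* Escape from a point q of the open disc to outside the closed disc inside the sublevel
   set {u1 <= u1 q} plus the point P, never touching the circle except on the negative
   axis: rotate to the negative axis, then move left. *)
Lemma escape_path q : 0 < nrm q < 1 ->
  exists E : R -> pt, pc E /\ E 0 = q /\ 1 < nrm (E 1) /\
    forall s, 0 <= s <= 1 ->
      (E s = Ppt \/ u1 (E s) <= u1 q) /\ (nrm (E s) < 1 \/ (snd (E s) = 0 /\ fst (E s) < 0)).
Proof.
  intros Hq. pose proof PI_RGT_0.
  destruct (polar q ltac:(lra)) as [th0 [Hth0 Hpol]]. set (rho := nrm q) in *.
  set (W2 := fun s => (rho * cos (th0 + s * (PI - th0)), rho * sin (th0 + s * (PI - th0)))).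
  set (W3 := fun s => (- rho - 2 * s, 0)).
  assert (E21 : W2 1 = W3 0).
  { unfold W2, W3. replace (th0 + 1 * (PI - th0)) with PI by ring.
    rewrite cos_PI, sin_PI. f_equal; ring. }
  assert (HW3n : forall t, 0 <= t -> nrm (W3 t) = rho + 2 * t)
    by (intros t Ht; unfold W3; rewrite nrm_x0, Rabs_left1; lra).
  exists (pcat W2 W3). split; [| split; [| split]].
  - apply pcat_pc; unfold W2, W3; split; cbn [fst snd]; try apply C1_const.
    + apply C1_mult; [apply C1_const | apply C1_cos, C1_affine].
    + apply C1_mult; [apply C1_const | apply C1_sin, C1_affine].
    + apply C1_minus; [apply C1_const | apply C1_mult; [apply C1_const | apply C1_id]].
  - rewrite pcat_lo by lra. unfold W2. rewrite Rmult_0_r, !Rmult_0_l, Rplus_0_r. auto.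
  - rewrite pcat_hi by (auto; lra). rewrite HW3n; lra.
  - intros s Hs. destruct (pcat_cases W2 W3 s E21 Hs) as [t [Ht [E | E]]]; rewrite E.
    + split; [right | left].
      * apply u1_rotate; auto.
      * unfold W2; cbv beta. rewrite nrm_polar; lra.
    + split.
      * destruct (Req_dec (rho + 2 * t) 1) as [E1 | E1].
        -- left. unfold W3, Ppt; cbv beta. f_equal. replace (-1) with (- (rho + 2 * t)) by (rewrite E1; ring). ring.
        -- right. unfold W3. replace (- rho - 2 * t) with (- (rho + 2 * t)) by ring.
           apply u1_neg_axis; [auto | fold rho; lra | auto].
      * right. unfold W3; cbn [fst snd]. split; [auto | lra].
Qed.

Definition subpath (gamma : R -> pt) (al be : R) (s : R) : pt := gamma (clamp (al + s * (be - al))).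

Lemma subpath_pc gamma al be :
  (forall t, 0 <= t <= 1 ->
     filterlim gamma (within (fun s => 0 <= s <= 1) (locally t)) (locally (gamma t))) ->
  pc (subpath gamma al be).
Proof.
  intros Hc. apply (pc_comp (fun s => al + s * (be - al)) (fun t => gamma (clamp t))).
  - apply C1_affine.
  - apply clamped_pc; auto.
Qed.

Lemma subpath_param gamma al be s : 0 <= al <= be -> be <= 1 -> 0 <= s <= 1 ->
  al <= al + s * (be - al) <= be /\ subpath gamma al be s = gamma (al + s * (be - al)).
Proof.
  intros Hab Hb Hs. assert (al <= al + s * (be - al) <= be) by nra.
  split; [auto |]. unfold subpath. rewrite clamp_id by lra. reflexivity.
Qed.

Lemma subpath_0 gamma al be : 0 <= al <= be -> be <= 1 -> subpath gamma al be 0 = gamma al.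
Proof. intros. unfold subpath. rewrite Rmult_0_l, Rplus_0_r, clamp_id by lra. reflexivity. Qed.

Lemma subpath_1 gamma al be : 0 <= al <= be -> be <= 1 -> subpath gamma al be 1 = gamma be.
Proof. intros. unfold subpath. replace (al + 1 * (be - al)) with be by ring. rewrite clamp_id by lra. reflexivity. Qed.

Lemma pc_near (f : R -> pt) x del : pc f -> 0 < del ->
  exists eta, 0 < eta /\ forall y, Rabs (y - x) < eta -> dst (f y) (f x) < del.
Proof.
  intros [H1 H2] Hdel.
  destruct (H1 x (del / 2) ltac:(lra)) as [e1 [He1 Hx1]].
  destruct (H2 x (del / 2) ltac:(lra)) as [e2 [He2 Hx2]].
  exists (Rmin e1 e2). split; [apply Rmin_pos; lra |]. intros y Hy.
  pose proof (Rmin_l e1 e2); pose proof (Rmin_r e1 e2).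
  destruct (Req_dec y x) as [-> | Hne].
  - unfold dst, psub. rewrite !Rminus_diag_eq by reflexivity.
    unfold nrm; cbn [fst snd]. replace (0 ^ 2 + 0 ^ 2) with 0 by ring. rewrite sqrt_0. lra.
  - assert (Hd : D_x no_cond x y /\ Rdist y x < e1) by (split; [split; [exact I | auto] | unfold Rdist; lra]).
    assert (Hd2 : D_x no_cond x y /\ Rdist y x < e2) by (split; [split; [exact I | auto] | unfold Rdist; lra]).
    specialize (Hx1 y Hd). specialize (Hx2 y Hd2). simpl in Hx1, Hx2. unfold Rdist in Hx1, Hx2.
    eapply Rle_lt_trans; [apply dst_le_abs | lra].
Qed.

Lemma intervals_disjoint (a b : nat -> R) N :
  (forall i, (i < N)%nat -> 0 <= a i /\ a i < b i /\ b i <= 1) ->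
  (forall i, (S i < N)%nat -> b i < a (S i)) ->
  forall i j, (i < N)%nat -> (j < N)%nat -> i <> j -> b i < a j \/ b j < a i.
Proof.
  intros Hab Hba.
  assert (Hmono : forall m n, (m < n)%nat -> (n < N)%nat -> b m < a n).
  { intros m n Hmn. induction n; intros Hn; [lia |].
    destruct (Nat.eq_dec m n) as [-> | Hne]; [apply Hba; auto |].
    pose proof (IHn ltac:(lia) ltac:(lia)). pose proof (Hab n ltac:(lia)). pose proof (Hba n Hn). lra. }
  intros i j Hi Hj Hij. destruct (Nat.lt_total i j) as [H | [H | H]]; [left | contradiction | right];
    apply Hmono; auto.
Qed.

Lemma arc_strict_interior p q z : on_arc p q z -> z <> p -> z <> q ->
  exists ta tb sig, -PI < ta < PI /\ -PI < tb < PI /\ p = (cos ta, sin ta) /\ q = (cos tb, sin tb) /\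
    Rmin ta tb < sig < Rmax ta tb /\ z = (cos sig, sin sig).
Proof.
  intros [ta [tb [sig [Hta [Htb [Hp [Hq [[Hs1 Hs2] Hz]]]]]]]] Hzp Hzq.
  assert (Hlo : Rmin ta tb < sig).
  { destruct (Req_dec (Rmin ta tb) sig) as [E | E]; [| lra].
    exfalso. unfold Rmin in E. destruct Rle_dec; subst; congruence. }
  assert (Hhi : sig < Rmax ta tb).
  { destruct (Req_dec sig (Rmax ta tb)) as [E | E]; [| lra].
    exfalso. unfold Rmax in E. destruct Rle_dec; subst; congruence. }
  exists ta, tb, sig. tauto.
Qed.

Lemma chord_arc_off_neg_axis ta tb t : -PI < ta < PI -> -PI < tb < PI -> 0 <= t <= 1 ->
  ~ (snd (chord_arc ta tb t) = 0 /\ fst (chord_arc ta tb t) < 0).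
Proof.
  intros Hta Htb Ht [Hs Hc]. unfold chord_arc, arcf in Hs, Hc; cbn [fst snd] in Hs, Hc.
  assert (Hphi : -PI < ta + t * (tb - ta) < PI).
  { destruct (Req_dec t 1) as [-> | Ht1]; [lra |].
    assert (0 < 1 - t) by lra.
    pose proof (Rmult_lt_0_compat (1 - t) (ta + PI) ltac:(lra) ltac:(lra)).
    pose proof (Rmult_lt_0_compat (1 - t) (PI - ta) ltac:(lra) ltac:(lra)).
    pose proof (Rmult_le_pos t (tb + PI) ltac:(lra) ltac:(lra)).
    pose proof (Rmult_le_pos t (PI - tb) ltac:(lra) ltac:(lra)). nra. }
  pose proof (cos_gt_m1 _ Hphi). pose proof (sin2_cos2 (ta + t * (tb - ta))) as E.
  rewrite Hs in E. unfold Rsqr in E. nra.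
Qed.

Section Nested.

Variable gamma : R -> pt.
Hypothesis gamma_cont : forall t, 0 <= t <= 1 ->
  filterlim gamma (within (fun s => 0 <= s <= 1) (locally t)) (locally (gamma t)).
Hypothesis gamma_inj : forall s t, 0 <= s <= 1 -> 0 <= t <= 1 -> gamma s = gamma t -> s = t.
Hypothesis gamma_P : forall t, 0 <= t <= 1 -> gamma t <> Ppt.

(* A point of gamma_i where u1 is below 1 lies strictly inside gamma_i and inside the
   open disc, off the origin (where u1 = 1). *)
Lemma minimiser_interior ai bi s0 :
  (forall t, ai < t < bi -> nrm (gamma t) < 1) -> nrm (gamma ai) = 1 -> nrm (gamma bi) = 1 ->
  ai <= s0 <= bi -> u1 (gamma s0) < 1 -> ai < s0 < bi /\ 0 < nrm (gamma s0) < 1.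
Proof.
  intros Hin Hai Hbi Hs0 Hq1.
  assert (Hend : forall t, nrm (gamma t) = 1 -> s0 <> t)
    by (intros t Ht E; rewrite E, u1_bd in Hq1 by auto; lra).
  pose proof (Hend ai Hai). pose proof (Hend bi Hbi).
  assert (Hs : ai < s0 < bi) by lra. split; [auto |].
  split; [| apply Hin; auto]. destruct (nrm_ge0 (gamma s0)) as [| E]; auto.
  rewrite u1_in in Hq1 by lra. lra.
Qed.

Lemma gamma_crosscut ai aj bj ta tb sig :
  0 <= ai <= 1 -> 0 <= aj < bj -> bj <= 1 -> ~ (aj <= ai <= bj) ->
  (forall t, aj < t < bj -> nrm (gamma t) < 1) -> -PI < ta < PI -> -PI < tb < PI ->
  gamma aj = (cos ta, sin ta) -> gamma bj = (cos tb, sin tb) ->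
  Rmin ta tb < sig < Rmax ta tb -> gamma ai = (cos sig, sin sig) ->
  exists del, 0 < del /\ forall V : R -> pt, pc V -> nrm (V 0) < 1 ->
    dst (V 0) (gamma ai) < del -> 1 < nrm (V 1) ->
    (forall s, 0 <= s <= 1 ->
       (forall t, aj <= t <= bj -> V s <> gamma t) /\
       (forall t, 0 <= t <= 1 -> V s <> chord_arc ta tb t)) -> False.
Proof.
  intros Hai Haj Hbj Hout Hin Hta Htb Hga Hgb Hsig Hx0.
  set (G := subpath gamma aj bj).
  assert (HGt : forall s, 0 <= s <= 1 -> exists t, aj <= t <= bj /\ G s = gamma t).
  { intros s Hs. destruct (subpath_param gamma aj bj s) as [Ht E]; try lra. eexists; eauto. }
  destruct (crosscut G ta tb sig) as [del [Hdel Hcut]]; auto.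
  - apply subpath_pc; auto.
  - unfold G. rewrite subpath_0 by lra. auto.
  - unfold G. rewrite subpath_1 by lra. auto.
  - intros s Hs. destruct (HGt s Hs) as [t [Ht ->]].
    destruct (Req_dec t aj) as [-> | ]; [rewrite Hga, nrm_unit; lra |].
    destruct (Req_dec t bj) as [-> | ]; [rewrite Hgb, nrm_unit; lra |].
    left. apply Hin. lra.
  - intros s Hs E. destruct (HGt s Hs) as [t [Ht Et]]. rewrite Et, <- Hx0 in E.
    apply gamma_inj in E; lra.
  - exists del. split; [auto |]. intros V HV HV0 HVx HV1 Hmiss.
    apply (Hcut V); auto; [rewrite <- Hx0; auto |].
    intros s t Hs Ht. destruct (Hmiss s Hs) as [HmG HmA]. split; [| apply HmA; auto].
    destruct (HGt t Ht) as [t' [Ht' ->]]. apply HmG; auto.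
Qed.

(* The heart of the lemma: when gamma ai lies strictly inside the arc between gamma aj
   and gamma bj, a point q = gamma s0 of gamma_i with u1 q below u1 on all of gamma_j
   gives a forbidden path for the cross-cut gamma_j: along gamma from near gamma ai to
   q, then through {u1 <= u1 q} out of the disc (escape_path). *)
Lemma nested_minimum ai bi aj bj ta tb sig s0 :
  0 <= ai < bi -> bi <= 1 -> 0 <= aj < bj -> bj <= 1 -> bi < aj \/ bj < ai ->
  (forall t, ai < t < bi -> nrm (gamma t) < 1) -> (forall t, aj < t < bj -> nrm (gamma t) < 1) ->
  nrm (gamma bi) = 1 -> -PI < ta < PI -> -PI < tb < PI ->
  gamma aj = (cos ta, sin ta) -> gamma bj = (cos tb, sin tb) ->
  Rmin ta tb < sig < Rmax ta tb -> gamma ai = (cos sig, sin sig) ->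
  ai <= s0 <= bi -> (forall t, aj <= t <= bj -> u1 (gamma s0) < u1 (gamma t)) -> False.
Proof.
  intros Hai Hbi Haj Hbj Hdisj Hin_i Hin_j Hbi1 Hta Htb Hga Hgb Hsig Hx0 Hs0 Hlow.
  assert (Hq1 : u1 (gamma s0) < 1).
  { pose proof (Hlow aj ltac:(lra)) as H. rewrite Hga, (u1_bd (cos ta, sin ta)) in H by apply nrm_unit. lra. }
  destruct (minimiser_interior ai bi s0) as [Hs0' Hq]; auto; [rewrite Hx0; apply nrm_unit |].
  destruct (gamma_crosscut ai aj bj ta tb sig) as [del [Hdel Hcut]]; auto; try lra.
  (* start slightly after ai, within del of gamma ai *)
  destruct (pc_near (fun t => gamma (clamp t)) ai del (clamped_pc gamma gamma_cont) Hdel)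
    as [eta [Heta Hnear]].
  assert (He : exists e, 0 < e < eta /\ ai + e < s0)
    by (exists (Rmin (eta / 2) ((s0 - ai) / 2)); unfold Rmin; destruct Rle_dec; lra).
  destruct He as [e He].
  set (W1 := subpath gamma (ai + e) s0).
  destruct (escape_path (gamma s0) Hq) as [E [HE [HE0 [HE1 HEs]]]].
  assert (J : W1 1 = E 0) by (unfold W1; rewrite subpath_1, HE0 by lra; reflexivity).
  assert (HW10 : pcat W1 E 0 = gamma (ai + e)).
  { rewrite pcat_lo by lra. replace (2 * 0) with 0 by ring. unfold W1. apply subpath_0; lra. }
  apply (Hcut (pcat W1 E)).
  - apply pcat_pc; auto. apply subpath_pc; auto.
  - rewrite HW10. apply Hin_i. lra.
  - rewrite HW10. pose proof (Hnear (ai + e) ltac:(rewrite Rabs_pos_eq; lra)) as H.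
    rewrite !clamp_id in H by lra. exact H.
  - rewrite pcat_hi by (auto; lra). replace (2 * 1 - 1) with 1 by ring. auto.
  - intros s Hs. destruct (pcat_cases W1 E s J Hs) as [s' [Hs' [-> | ->]]].
    + (* along gamma_i: off gamma_j by injectivity, inside the open disc *)
      unfold W1. destruct (subpath_param gamma (ai + e) s0 s') as [Hr ->]; try lra.
      assert (Hn : nrm (gamma (ai + e + s' * (s0 - (ai + e)))) < 1) by (apply Hin_i; lra).
      split; intros t Ht EG.
      * apply gamma_inj in EG; lra.
      * rewrite EG in Hn. unfold chord_arc in Hn. rewrite arcf_nrm in Hn. lra.
    + (* along the escape path: at P or below u1 on gamma_j, and inside the disc or on
         the negative axis *)
      destruct (HEs s' Hs') as [Hu Hpos]. split; intros t Ht EG.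
      * destruct Hu as [HP | Hu]; [apply (gamma_P t); [lra | congruence] |].
        rewrite EG in Hu. pose proof (Hlow t Ht). lra.
      * destruct Hpos as [Hn | Hneg].
        -- rewrite EG in Hn. unfold chord_arc in Hn. rewrite arcf_nrm in Hn. lra.
        -- rewrite EG in Hneg. apply (chord_arc_off_neg_axis ta tb t); auto.
Qed.

End Nested.

Theorem lemma3p1 :
  forall (gamma : R -> pt) (N : nat) (a b : nat -> R),
    (forall t, 0 <= t <= 1 ->
       filterlim gamma (within (fun s => 0 <= s <= 1) (locally t)) (locally (gamma t))) ->
    (forall s t, 0 <= s <= 1 -> 0 <= t <= 1 -> gamma s = gamma t -> s = t) ->
    (forall t, 0 <= t <= 1 -> gamma t <> Ppt) ->
    (forall i, (i < N)%nat -> 0 <= a i /\ a i < b i /\ b i <= 1) ->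
    (forall i, (S i < N)%nat -> b i < a (S i)) ->
    (forall i, (i < N)%nat -> forall t, a i < t < b i -> nrm (gamma t) < 1) ->
    (forall i, (i < N)%nat ->
       nrm (gamma (a i)) = 1 /\ gamma (a i) <> Ppt /\
       nrm (gamma (b i)) = 1 /\ gamma (b i) <> Ppt) ->
    forall i j, (i < N)%nat -> (j < N)%nat -> i <> j ->
      (forall z, on_arc (gamma (a i)) (gamma (b i)) z ->
                 on_arc (gamma (a j)) (gamma (b j)) z) ->
      forall li lj,
        IsMinOn (fun t => u1 (gamma t)) (a i) (b i) li ->
        IsMinOn (fun t => u1 (gamma t)) (a j) (b j) lj ->
        lj <= li.
Proof.
  intros gamma NN a b Hcont Hinj HnP Hab Hba Hin Hbd i j Hi Hj Hij Hsub li lj Hmi Hmj.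
  destruct (Rle_dec lj li) as [| Hlt]; [auto | exfalso]. apply Rnot_le_lt in Hlt.
  destruct (Hab i Hi) as [Hai [Habi Hbi]]. destruct (Hab j Hj) as [Haj [Habj Hbj]].
  destruct (Hbd i Hi) as [Hnai [HPai [Hnbi _]]].
  (* gamma (a i) lies on its own arc, hence on A_j, and strictly inside it by injectivity *)
  assert (Hon : on_arc (gamma (a j)) (gamma (b j)) (gamma (a i))).
  { apply Hsub. destruct (circle_polar _ Hnai HPai) as [tx [Htx Hx]].
    destruct (circle_polar _ Hnbi (proj2 (proj2 (proj2 (Hbd i Hi))))) as [ty [Hty Hy]].
    exists tx, ty, tx. exact (conj Htx (conj Hty (conj Hx (conj Hy (conj (conj (Rmin_l _ _) (Rmax_l _ _)) Hx))))). }
  pose proof (intervals_disjoint a b NN Hab Hba i j Hi Hj Hij) as Hdisj.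
  destruct (arc_strict_interior _ _ _ Hon) as [ta [tb [sig [Hta [Htb [Hga [Hgb [Hsig Hx0]]]]]]]];
    [intros E; apply Hinj in E; lra .. |].
  destruct Hmi as [[s0 [Hs0 Hq]] _]. destruct Hmj as [_ Hmj].
  apply (nested_minimum gamma Hcont Hinj HnP (a i) (b i) (a j) (b j) ta tb sig s0);
    try (apply Hin; assumption); auto.
  intros t Ht. pose proof (Hmj t Ht). cbv beta in *. lra.
Qed.
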